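(* (1) If $(x_0,y_0)\in W_+$ then $A_L^1(\tau^L_{W_+^c})\ge u_c$, and if $\bar u_c<\infty$ then $A_U^1(\tau^U_{W_+^c})\ge\bar u_c$ (flows started at $(x_0,y_0)$). (2) Let $B\subset\mathbb R\times\mathbb R_+$ be bounded. For every $\delta>0$ there exists $T_0$ such that for every $(x_0,y_0)\in B\cap W_+$, $\tau^L_{A_{0,\delta}\cup A_1}\le T_0$, and if $\bar u_c<\infty$ also $\tau^U_{A_{0,\delta}\cup A_1}\le T_0$.
   Context: Fix an integer $p\ge3$, $\beta>0$, $\Lambda_p>0$. $\mathcal F_1(u,v)=-pu+\beta v$, $\mathcal F_2^L(u,v)=2p(p-1)-2(p-1)v+2pu(pu-\beta v)-2\beta\Lambda_pv$, $\mathcal F_2^U$ the same with $+2\beta\Lambda_pv$. $A_L(t)$ (resp. $A_U(t)$) solves $\dot A=(\mathcal F_1,\mathcal F_2^L)(A)$ (resp. $(\mathcal F_1,\mathcal F_2^U)(A)$), $A(0)=(x_0,y_0)$; $\tau^L_B=\inf\{t\ge0:A_L(t)\in B\}$, $\tau^U_B$ likewise. $W_\pm=\{(x,y)\in\mathbb R\times\mathbb R_+:\pm\mathcal F_1>0\}$; for starts in $W_\pm$, $\gamma_L(\cdot;(x_0,y_0))$, $\gamma_U(\cdot;(x_0,y_0))$ are the functions of $u$ whose graphs are the trajectories of $A_L$, $A_U$ up to $\tau_{W_\pm^c}$ (for starts on $\{\mathcal F_1=0\}$, up to the first positive time they reach $\{\mathcal F_1=0\}$). $\ell_1(u)=pu/\beta$;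 $f_L(u)=\frac{p(p-1)+p^2u^2}{p-1+p\beta u+\beta\Lambda_p}$, $f_U(u)=\frac{p(p-1)+p^2u^2}{p-1+p\beta u-\beta\Lambda_p}$ on domains where $0\le f<\infty$. $u_c=\beta(1+\frac{\beta\Lambda_p}{p-1})^{-1}$; $\bar u_c=\beta(1-\frac{\beta\Lambda_p}{p-1})^{-1}$ if $\beta\Lambda_p<p-1$, else $\infty$; $z_c=(u_c,f_L(u_c))$, $\bar z_c=(\bar u_c,f_U(\bar u_c))$. $A_0=\{(u,v):v\in[\gamma_L(u;A_U(\tau^U_{W_+^c})),\gamma_U(u;z_c)]\}$ if $\bar u_c<\infty$ (with $A_U$ started at $z_c$), and $A_0=\{(u,v):v\in[f_L(u),\gamma_U(u;z_c)]\}$ otherwise; $A_{0,\delta}=A_0\cup B_{\ell^\infty}(z_c,\delta)\cup B_{\ell^\infty}(\bar z_c,\delta)$ (second ball omitted if $\bar u_c=\infty$); $A_1=\{(u,v)\in\mathbb R\times\mathbb R_+:v\in[f_L(u),\ell_1(u)]\}\setminus A_0$. *)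

From Stdlib Require Import Reals Lra.
Open Scope R_scope.

Definition F1 (p : nat) (beta : R) (u v : R) : R := - INR p * u + beta * v.

Definition F2L (p : nat) (beta Lam : R) (u v : R) : R :=
  2 * INR p * (INR p - 1) - 2 * (INR p - 1) * v
  + 2 * INR p * u * (INR p * u - beta * v) - 2 * beta * Lam * v.

Definition F2U (p : nat) (beta Lam : R) (u v : R) : R :=
  2 * INR p * (INR p - 1) - 2 * (INR p - 1) * v
  + 2 * INR p * u * (INR p * u - beta * v) + 2 * beta * Lam * v.

Definition FL (p : nat) (beta Lam : R) (u v : R) : R * R :=
  (F1 p beta u v, F2L p beta Lam u v).
Definition FU (p : nat) (beta Lam : R) (u v : R) : R * R :=
  (F1 p beta u v, F2U p beta Lam u v).

(* T = None means T = +oo *)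
Definition in_dom (T : option R) (t : R) : Prop :=
  0 <= t /\ match T with Some b => t < b | None => True end.

Definition is_sol (F : R -> R -> R * R) (z0 : R * R) (T : option R)
  (A : R -> R * R) : Prop :=
  (match T with Some b => 0 < b | None => True end) /\
  A 0 = z0 /\
  (forall t, in_dom T t -> forall eps, 0 < eps -> exists d, 0 < d /\
     forall s, in_dom T s -> Rabs (s - t) < d ->
       Rabs (fst (A s) - fst (A t)) < eps /\ Rabs (snd (A s) - snd (A t)) < eps) /\
  (forall t, 0 < t -> in_dom T t ->
     derivable_pt_lim (fun s => fst (A s)) t (fst (F (fst (A t)) (snd (A t)))) /\
     derivable_pt_lim (fun s => snd (A s)) t (snd (F (fst (A t)) (snd (A t))))).

Definition is_max_sol (F : R -> R -> R * R) (z0 : R * R) (T : option R)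
  (A : R -> R * R) : Prop :=
  is_sol F z0 T A /\
  match T with
  | None => True
  | Some b => forall b', b < b' -> forall A', ~ is_sol F z0 (Some b') A'
  end.

(* greatest lower bound (infimum) of a set of reals; forces nonemptiness *)
Definition is_glb (S : R -> Prop) (m : R) : Prop :=
  (forall x, S x -> m <= x) /\ (forall m', (forall x, S x -> m' <= x) -> m' <= m).

Definition Wplus (p : nat) (beta : R) (z : R * R) : Prop :=
  0 <= snd z /\ F1 p beta (fst z) (snd z) > 0.
Definition Wminus (p : nat) (beta : R) (z : R * R) : Prop :=
  0 <= snd z /\ F1 p beta (fst z) (snd z) < 0.

Definition l1 (p : nat) (beta u : R) : R := INR p * u / beta.

Definition fL_den (p : nat) (beta Lam u : R) : R :=
  INR p - 1 + INR p * beta * u + beta * Lam.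
Definition fU_den (p : nat) (beta Lam u : R) : R :=
  INR p - 1 + INR p * beta * u - beta * Lam.
Definition fL (p : nat) (beta Lam u : R) : R :=
  (INR p * (INR p - 1) + INR p ^ 2 * u ^ 2) / fL_den p beta Lam u.
Definition fU (p : nat) (beta Lam u : R) : R :=
  (INR p * (INR p - 1) + INR p ^ 2 * u ^ 2) / fU_den p beta Lam u.
(* fL u is defined (0 <= fL u < oo) iff fL_den u > 0 *)

Definition uc (p : nat) (beta Lam : R) : R :=
  beta / (1 + beta * Lam / (INR p - 1)).
(* ubar_c < oo  iff  beta*Lam < p-1 ; then: *)
Definition ubarc (p : nat) (beta Lam : R) : R :=
  beta / (1 - beta * Lam / (INR p - 1)).
Definition ubarc_finite (p : nat) (beta Lam : R) : Prop := beta * Lam < INR p - 1.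

Definition zc (p : nat) (beta Lam : R) : R * R :=
  (uc p beta Lam, fL p beta Lam (uc p beta Lam)).
Definition zbarc (p : nat) (beta Lam : R) : R * R :=
  (ubarc p beta Lam, fU p beta Lam (ubarc p beta Lam)).

(* graph of gamma(.; z0): the trajectory of the maximal solution of
   dA = F(A), A(0)=z0, up to the exit time from W_+ / W_- (start in W_+/W_-),
   or up to the first positive time it reaches {F1 = 0} (start on {F1 = 0}).
   gamma_graph ... u v  <->  gamma(u; z0) = v. *)
Definition gamma_graph (p : nat) (beta : R) (F : R -> R -> R * R)
  (z0 : R * R) (u v : R) : Prop :=
  exists T A, is_max_sol F z0 T A /\
  exists t, in_dom T t /\ A t = (u, v) /\
   ((Wplus p beta z0 /\ forall s, 0 <= s < t -> Wplus p beta (A s)) \/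
    (Wminus p beta z0 /\ forall s, 0 <= s < t -> Wminus p beta (A s)) \/
    (F1 p beta (fst z0) (snd z0) = 0 /\
       forall s, 0 < s < t -> F1 p beta (fst (A s)) (snd (A s)) <> 0)).

(* A_U(tau^U_{W_+^c}) with A_U started at z_c: the point where the U-flow
   from z_c first leaves W_+ after time 0 *)
Definition retpt (p : nat) (beta Lam : R) (P : R * R) : Prop :=
  exists T A, is_max_sol (FU p beta Lam) (zc p beta Lam) T A /\
  exists tau, in_dom T tau /\
    is_glb (fun t => in_dom T t /\ 0 < t /\ ~ Wplus p beta (A t)) tau /\
    P = A tau.

Definition A0 (p : nat) (beta Lam : R) (z : R * R) : Prop :=
  (ubarc_finite p beta Lam /\
     exists P, retpt p beta Lam P /\
     exists v1 v2, gamma_graph p beta (FL p beta Lam) P (fst z) v1 /\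
       gamma_graph p beta (FU p beta Lam) (zc p beta Lam) (fst z) v2 /\
       v1 <= snd z <= v2) \/
  (~ ubarc_finite p beta Lam /\
     0 < fL_den p beta Lam (fst z) /\ fL p beta Lam (fst z) <= snd z /\
     exists v2, gamma_graph p beta (FU p beta Lam) (zc p beta Lam) (fst z) v2 /\
       snd z <= v2).

Definition ballinf (c : R * R) (delta : R) (z : R * R) : Prop :=
  Rabs (fst z - fst c) < delta /\ Rabs (snd z - snd c) < delta.

Definition A0delta (p : nat) (beta Lam delta : R) (z : R * R) : Prop :=
  A0 p beta Lam z \/ ballinf (zc p beta Lam) delta z \/
  (ubarc_finite p beta Lam /\ ballinf (zbarc p beta Lam) delta z).

Definition A1 (p : nat) (beta Lam : R) (z : R * R) : Prop :=
  0 <= snd z /\ 0 < fL_den p beta Lam (fst z) /\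
  fL p beta Lam (fst z) <= snd z <= l1 p beta (fst z) /\ ~ A0 p beta Lam z.

Definition target (p : nat) (beta Lam delta : R) (z : R * R) : Prop :=
  A0delta p beta Lam delta z \/ A1 p beta Lam z.

(* The flows [A_L] and [A_U] are both instances of the quadratic field
   [u' = - P u + beta v], [v' = 2 P (P - 1) - 2 K beta v + 2 P^2 u^2 - 2 P beta u v]
   with [K = (P - 1) / beta + Lam], resp. [K = (P - 1) / beta - Lam], and then
   [u_c], resp. [ubar_c], equals [c = (P - 1) / K].  In the variables [u] and [g = F1(u, v)]
   the system reads [u' = g], [g' = - P g + 2 beta P K (c - u) - 2 beta (K + P u) g].
   (1) From [W_+] the solution can only exit through [{g = 0}] (on [{v = 0}] the field points
   into [W_+]), and there [g' = 2 beta P K (c - u) <= 0] forces [u >= c].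
   (2) While [g > 0], [u] increases.  Away from a small box around the rest point
   [(c, P c / beta)], [u] first exceeds [c - delta] (as long as [u <= c - delta],
   [g + C u] grows linearly), then passes [c + delta] within two time units, after which [g]
   decreases at a fixed rate; an energy estimate bounds [g] meanwhile.  All times depend only
   on a bound of the initial data.  The solution cannot blow up earlier, since local analytic
   solutions (Cauchy majorants) exist on intervals depending only on a bound of the data.
   Finally the points of [{g = 0, u >= u_c}] lie in [A_0] or [A_1], and the rest point is
   [z_c], resp. [zbar_c]. *)

From Stdlib Require Import Reals Lra Lia Classical FunctionalExtensionality.
From Coquelicot Require Import Coquelicot.
Open Scope R_scope.

(** * Analytic local solutions of quadratic systems *)

Record quad_coefs := QuadCoefs { c1 : R; c2 : R; b0 : R; b1 : R; b2 : R; b3 : R; b4 : R }.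

Definition quad_field (cf : quad_coefs) (u v : R) : R * R :=
  (c1 cf * u + c2 cf * v,
   b0 cf + b1 cf * u + b2 cf * v + b3 cf * (u * u) + b4 cf * (u * v)).

Definition delta0 (n : nat) : R := if Nat.eqb n 0 then 1 else 0.

Definition next_coef (cf : quad_coefs) (h : nat -> R * R) (m : nat) : R * R :=
  ((c1 cf * fst (h m) + c2 cf * snd (h m)) / INR (S m),
   (b0 cf * delta0 m + b1 cf * fst (h m) + b2 cf * snd (h m)
     + b3 cf * PS_mult (fun i => fst (h i)) (fun i => fst (h i)) m
     + b4 cf * PS_mult (fun i => fst (h i)) (fun i => snd (h i)) m) / INR (S m)).

(* [coef_table cf u0 v0 n k] is the [k]-th Taylor coefficient pair for [k <= n]:
   the Cauchy products in [next_coef] need all earlier coefficients at once. *)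
Fixpoint coef_table (cf : quad_coefs) (u0 v0 : R) (n : nat) : nat -> R * R :=
  match n with
  | O => fun _ => (u0, v0)
  | S m => fun k =>
      if Nat.leb k m then coef_table cf u0 v0 m k else next_coef cf (coef_table cf u0 v0 m) m
  end.

Definition tayl_u (cf : quad_coefs) (u0 v0 : R) (n : nat) : R := fst (coef_table cf u0 v0 n n).
Definition tayl_v (cf : quad_coefs) (u0 v0 : R) (n : nat) : R := snd (coef_table cf u0 v0 n n).

Section TaylorCoefficients.

Variables (cf : quad_coefs) (u0 v0 : R).

Lemma coef_table_top m :
  coef_table cf u0 v0 (S m) (S m) = next_coef cf (coef_table cf u0 v0 m) m.
Proof. cbn [coef_table]. now rewrite (proj2 (Nat.leb_gt (S m) m) (Nat.lt_succ_diag_r m)). Qed.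

Lemma coef_table_stable m k : (k <= m)%nat -> coef_table cf u0 v0 m k = coef_table cf u0 v0 k k.
Proof.
  revert k; induction m as [|m IH]; intros k Hk.
  - replace k with 0%nat by lia. reflexivity.
  - destruct (Nat.leb k m) eqn:E.
    + cbn [coef_table]. rewrite E. apply IH, Nat.leb_le, E.
    + apply Nat.leb_gt in E. replace k with (S m) by lia. reflexivity.
Qed.

Lemma coef_table_succ m :
  coef_table cf u0 v0 (S m) (S m) = next_coef cf (fun i => coef_table cf u0 v0 i i) m.
Proof.
  rewrite coef_table_top. unfold next_coef.
  assert (Hprod : forall f g : R * R -> R,
    PS_mult (fun i => f (coef_table cf u0 v0 m i)) (fun i => g (coef_table cf u0 v0 m i)) m =
    PS_mult (fun i => f (coef_table cf u0 v0 i i)) (fun i => g (coef_table cf u0 v0 i i)) m).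
  { intros f g. apply sum_eq. intros i Hi.
    now rewrite (coef_table_stable m i), (coef_table_stable m (m - i)) by lia. }
  now rewrite (Hprod fst fst), (Hprod fst snd).
Qed.

Lemma tayl_u_succ m :
  INR (S m) * tayl_u cf u0 v0 (S m) = c1 cf * tayl_u cf u0 v0 m + c2 cf * tayl_v cf u0 v0 m.
Proof.
  unfold tayl_u, tayl_v. rewrite coef_table_succ. unfold next_coef; cbn [fst snd].
  field. apply not_0_INR. lia.
Qed.

Lemma tayl_v_succ m :
  INR (S m) * tayl_v cf u0 v0 (S m) =
  b0 cf * delta0 m + b1 cf * tayl_u cf u0 v0 m + b2 cf * tayl_v cf u0 v0 m
  + b3 cf * PS_mult (tayl_u cf u0 v0) (tayl_u cf u0 v0) m
  + b4 cf * PS_mult (tayl_u cf u0 v0) (tayl_v cf u0 v0) m.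
Proof.
  unfold tayl_u, tayl_v. rewrite coef_table_succ. unfold next_coef; cbn [fst snd].
  field. apply not_0_INR. lia.
Qed.

End TaylorCoefficients.

Definition tayl_growth (cf : quad_coefs) (D : R) : R :=
  1 + Rabs (c1 cf) + Rabs (c2 cf) + Rabs (b0 cf) + Rabs (b1 cf) + Rabs (b2 cf)
    + (Rabs (b3 cf) + Rabs (b4 cf)) * D.

Lemma PS_mult_geom_bound (a b : nat -> R) (D r : R) (n : nat) :
  0 <= D -> 0 <= r ->
  (forall k, (k <= n)%nat -> Rabs (a k) <= D * r ^ k /\ Rabs (b k) <= D * r ^ k) ->
  Rabs (PS_mult a b n) <= INR (S n) * (D * D * r ^ n).
Proof.
  intros HD Hr H. unfold PS_mult.
  eapply Rle_trans; [apply sum_f_R0_triangle|].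
  eapply Rle_trans; [apply sum_Rle with (Bn := fun _ => D * D * r ^ n)|].
  - intros i Hi. rewrite Rabs_mult.
    destruct (H i Hi) as [Ha _]. destruct (H (n - i)%nat ltac:(lia)) as [_ Hb].
    replace (D * D * r ^ n) with ((D * r ^ i) * (D * r ^ (n - i))).
    + apply Rmult_le_compat; auto using Rabs_pos.
    + assert (E : r ^ n = r ^ i * r ^ (n - i)) by (rewrite <- pow_add; f_equal; lia).
      rewrite E. ring.
  - rewrite sum_cte. lra.
Qed.

Section TaylorBounds.

Variables (cf : quad_coefs) (u0 v0 D : R).
Hypothesis HD : 1 <= D.

Lemma tayl_growth_ge1 : 1 <= tayl_growth cf D.
Proof.
  unfold tayl_growth.
  pose proof (Rabs_pos (c1 cf)); pose proof (Rabs_pos (c2 cf)); pose proof (Rabs_pos (b0 cf));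
  pose proof (Rabs_pos (b1 cf)); pose proof (Rabs_pos (b2 cf)); pose proof (Rabs_pos (b3 cf));
  pose proof (Rabs_pos (b4 cf)). nra.
Qed.

Lemma tayl_u_succ_bound n q : 1 <= q ->
  Rabs (tayl_u cf u0 v0 n) <= D * q -> Rabs (tayl_v cf u0 v0 n) <= D * q ->
  Rabs (tayl_u cf u0 v0 (S n)) <= tayl_growth cf D * (D * q).
Proof.
  intros Hq Hu Hv.
  assert (HN : 1 <= INR (S n)) by (apply (le_INR 1); lia).
  pose proof (Rabs_pos (c1 cf)); pose proof (Rabs_pos (c2 cf)).
  assert (Hrec : INR (S n) * Rabs (tayl_u cf u0 v0 (S n))
                 <= (Rabs (c1 cf) + Rabs (c2 cf)) * (D * q)).
  { rewrite <- (Rabs_right (INR (S n))) at 1 by lra. rewrite <- Rabs_mult, tayl_u_succ.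
    eapply Rle_trans; [apply Rabs_triang|]. rewrite !Rabs_mult.
    pose proof (Rmult_le_compat_l _ _ _ (Rabs_pos (c1 cf)) Hu).
    pose proof (Rmult_le_compat_l _ _ _ (Rabs_pos (c2 cf)) Hv). lra. }
  assert (Hc : Rabs (c1 cf) + Rabs (c2 cf) <= tayl_growth cf D).
  { unfold tayl_growth. pose proof (Rabs_pos (b0 cf)); pose proof (Rabs_pos (b1 cf));
    pose proof (Rabs_pos (b2 cf)); pose proof (Rabs_pos (b3 cf)); pose proof (Rabs_pos (b4 cf)).
    nra. }
  assert (HDq : 0 <= D * q) by nra.
  pose proof (Rabs_pos (tayl_u cf u0 v0 (S n))).
  pose proof (Rmult_le_compat_r _ _ _ HDq Hc). nra.
Qed.

Lemma tayl_v_succ_bound n :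
  (forall k, (k <= n)%nat -> Rabs (tayl_u cf u0 v0 k) <= D * tayl_growth cf D ^ k /\
                            Rabs (tayl_v cf u0 v0 k) <= D * tayl_growth cf D ^ k) ->
  Rabs (tayl_v cf u0 v0 (S n)) <= tayl_growth cf D * (D * tayl_growth cf D ^ n).
Proof.
  intros IH. set (r := tayl_growth cf D). set (q := r ^ n). set (N := INR (S n)).
  assert (Hr : 1 <= r) by apply tayl_growth_ge1.
  assert (Hq : 1 <= q) by (apply pow_R1_Rle; lra).
  assert (HN : 1 <= N) by (apply (le_INR 1); lia).
  destruct (IH n (le_n n)) as [Hun Hvn].
  pose proof (PS_mult_geom_bound _ _ D r n ltac:(lra) ltac:(lra)
               (fun k Hk => conj (proj1 (IH k Hk)) (proj1 (IH k Hk)))) as Huu.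
  pose proof (PS_mult_geom_bound _ _ D r n ltac:(lra) ltac:(lra) IH) as Huv.
  change (tayl_growth cf D ^ n) with q in Hun, Hvn. fold N in Huu, Huv. change (r ^ n) with q in Huu, Huv.
  pose proof (Rabs_pos (b0 cf)); pose proof (Rabs_pos (b1 cf)); pose proof (Rabs_pos (b2 cf));
  pose proof (Rabs_pos (b3 cf)); pose proof (Rabs_pos (b4 cf)).
  assert (Hdelta : Rabs (delta0 n) <= 1).
  { unfold delta0. destruct (Nat.eqb n 0); rewrite ?Rabs_R1, ?Rabs_R0; lra. }
  assert (Hrec : N * Rabs (tayl_v cf u0 v0 (S n)) <=
      Rabs (b0 cf) + (Rabs (b1 cf) + Rabs (b2 cf)) * (D * q)
      + (Rabs (b3 cf) + Rabs (b4 cf)) * (N * (D * D * q))).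
  { rewrite <- (Rabs_right N) at 1 by lra. unfold N. rewrite <- Rabs_mult, tayl_v_succ.
    match goal with |- Rabs (?a + ?b + ?c + ?d + ?e) <= _ =>
      pose proof (Rabs_triang (a + b + c + d) e); pose proof (Rabs_triang (a + b + c) d);
      pose proof (Rabs_triang (a + b) c); pose proof (Rabs_triang a b) end.
    rewrite !Rabs_mult in *.
    pose proof (Rmult_le_compat_l _ _ _ (Rabs_pos (b0 cf)) Hdelta).
    pose proof (Rmult_le_compat_l _ _ _ (Rabs_pos (b1 cf)) Hun).
    pose proof (Rmult_le_compat_l _ _ _ (Rabs_pos (b2 cf)) Hvn).
    pose proof (Rmult_le_compat_l _ _ _ (Rabs_pos (b3 cf)) Huu).
    pose proof (Rmult_le_compat_l _ _ _ (Rabs_pos (b4 cf)) Huv). fold N. lra. }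
  (* divide by [N >= 1]; the constant term is absorbed using [D * q >= 1] *)
  assert (Hdiv : Rabs (tayl_v cf u0 v0 (S n)) <=
      (Rabs (b0 cf) + Rabs (b1 cf) + Rabs (b2 cf) + (Rabs (b3 cf) + Rabs (b4 cf)) * D) * (D * q)).
  { pose proof (Rabs_pos (tayl_v cf u0 v0 (S n))).
    assert (HDq : 1 <= D * q) by nra.
    assert (HNDq : 1 <= N * (D * q)) by nra.
    assert (Rabs (b0 cf) <= N * (Rabs (b0 cf) * (D * q))) by nra.
    assert (0 <= (Rabs (b1 cf) + Rabs (b2 cf)) * (D * q)) by nra.
    assert ((Rabs (b1 cf) + Rabs (b2 cf)) * (D * q) <= N * ((Rabs (b1 cf) + Rabs (b2 cf)) * (D * q)))
      by nra.
    apply (Rmult_le_reg_l N); [lra|]. nra. }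
  eapply Rle_trans; [exact Hdiv|]. apply Rmult_le_compat_r; [nra|].
  unfold r, tayl_growth. pose proof (Rabs_pos (c1 cf)); pose proof (Rabs_pos (c2 cf)). lra.
Qed.

Lemma tayl_coef_bound : Rabs u0 <= D -> Rabs v0 <= D -> forall n,
  Rabs (tayl_u cf u0 v0 n) <= D * tayl_growth cf D ^ n /\
  Rabs (tayl_v cf u0 v0 n) <= D * tayl_growth cf D ^ n.
Proof.
  intros Hu Hv.
  assert (Hr : 1 <= tayl_growth cf D) by apply tayl_growth_ge1.
  enough (Hall : forall n k, (k <= n)%nat ->
    Rabs (tayl_u cf u0 v0 k) <= D * tayl_growth cf D ^ k /\
    Rabs (tayl_v cf u0 v0 k) <= D * tayl_growth cf D ^ k) by (intro n; apply (Hall n n), le_n).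
  induction n as [|n IH]; intros k Hk.
  - replace k with 0%nat by lia. simpl. unfold tayl_u, tayl_v. simpl. lra.
  - destruct (Nat.le_gt_cases k n) as [Hkn|Hkn]; [now apply IH|].
    replace k with (S n) by lia. cbn [pow].
    assert (Hq : 1 <= tayl_growth cf D ^ n) by (apply pow_R1_Rle; lra).
    destruct (IH n (le_n n)) as [Hun Hvn].
    rewrite <- Rmult_assoc, (Rmult_comm D), Rmult_assoc. split.
    + apply tayl_u_succ_bound; assumption.
    + apply tayl_v_succ_bound, IH.
Qed.

End TaylorBounds.

Lemma lt_CV_radius_geom (a : nat -> R) (D r x : R) : 0 < r ->
  (forall n, Rabs (a n) <= D * r ^ n) -> Rabs x < / r -> Rbar_lt (Rabs x) (CV_radius a).
Proof.
  intros Hr H Hx. eapply Rbar_lt_le_trans with (Finite (/ r)); [exact Hx|].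
  apply (proj1 (CV_radius_bounded a)). exists D. intro n.
  rewrite Rabs_mult, (Rabs_right ((/ r) ^ n)) by (left; apply pow_lt, Rinv_0_lt_compat, Hr).
  rewrite pow_inv. assert (0 < r ^ n) by (apply pow_lt; lra).
  apply Rle_trans with (D * r ^ n * / r ^ n).
  - apply Rmult_le_compat_r; [left; apply Rinv_0_lt_compat; lra| apply H].
  - right. field. lra.
Qed.

Lemma is_pseries_delta0 x : is_pseries delta0 x 1.
Proof.
  assert (He : ex_pseries delta0 x).
  { pose proof (Rabs_pos x).
    apply CV_radius_inside, (lt_CV_radius_geom delta0 1 (/ (Rabs x + 1))).
    - apply Rinv_0_lt_compat. lra.
    - intro n. assert (0 < (/ (Rabs x + 1)) ^ n) by (apply pow_lt, Rinv_0_lt_compat; lra).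
      unfold delta0. destruct n; cbn [Nat.eqb]; rewrite ?pow_O, ?Rabs_R1, ?Rabs_R0; lra.
    - rewrite Rinv_inv. lra. }
  pose proof (PSeries_correct _ _ He) as Hc.
  rewrite (PSeries_decr_1 _ _ He) in Hc.
  rewrite (PSeries_ext (PS_decr_1 delta0) (fun _ => 0)) in Hc by (intro n; reflexivity).
  rewrite PSeries_const_0 in Hc. replace (delta0 0 + x * 0) with 1 in Hc by (unfold delta0; simpl; ring).
  exact Hc.
Qed.

(* Cauchy's majorant argument: the Taylor coefficients grow at most geometrically with a ratio
   depending only on a bound [D] of the initial value, so the series converge on a common
   interval. *)
Lemma quad_field_local_sol (cf : quad_coefs) (D : R) : 1 <= D ->
  exists h, 0 < h /\ forall u0 v0, Rabs u0 <= D -> Rabs v0 <= D ->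
  exists f : R -> R * R, f 0 = (u0, v0) /\
    forall x, Rabs x < h ->
      derivable_pt_lim (fun s => fst (f s)) x (fst (quad_field cf (fst (f x)) (snd (f x)))) /\
      derivable_pt_lim (fun s => snd (f s)) x (snd (quad_field cf (fst (f x)) (snd (f x)))).
Proof.
  intros HD. set (r := tayl_growth cf D).
  assert (Hr : 1 <= r) by (apply tayl_growth_ge1, HD).
  exists (/ r). split; [apply Rinv_0_lt_compat; lra|].
  intros u0 v0 Hu Hv.
  pose proof (tayl_coef_bound cf u0 v0 D HD Hu Hv) as HB. fold r in HB.
  set (a := tayl_u cf u0 v0) in *. set (b := tayl_v cf u0 v0) in *.
  exists (fun x => (PSeries a x, PSeries b x)). cbn [fst snd]. split.
  { now rewrite !PSeries_0. }
  intros x Hx.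
  assert (Ra : Rbar_lt (Rabs x) (CV_radius a))
    by (apply (lt_CV_radius_geom a D r); [lra| intro n; apply HB| exact Hx]).
  assert (Rb : Rbar_lt (Rabs x) (CV_radius b))
    by (apply (lt_CV_radius_geom b D r); [lra| intro n; apply HB| exact Hx]).
  assert (Pa : is_pseries a x (PSeries a x)) by (apply PSeries_correct, CV_radius_inside, Ra).
  assert (Pb : is_pseries b x (PSeries b x)) by (apply PSeries_correct, CV_radius_inside, Rb).
  assert (Hscal : forall c s l, is_pseries s x l -> is_pseries (PS_scal c s) x (c * l))
    by (intros c s l Hs; apply (is_pseries_scal c s x l); [unfold mult; simpl; ring| exact Hs]).
  split; apply is_derive_Reals.
  - replace (fst (quad_field cf (PSeries a x) (PSeries b x))) with (PSeries (PS_derive a) x)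
      by (apply is_pseries_unique; unfold quad_field; cbn [fst];
          apply is_pseries_ext with (PS_plus (PS_scal (c1 cf) a) (PS_scal (c2 cf) b));
          [intro n; unfold PS_derive, a, b; rewrite tayl_u_succ; reflexivity|];
          exact (is_pseries_plus _ _ _ _ _ (Hscal _ _ _ Pa) (Hscal _ _ _ Pb))).
    apply is_derive_PSeries, Ra.
  - replace (snd (quad_field cf (PSeries a x) (PSeries b x))) with (PSeries (PS_derive b) x).
    { apply is_derive_PSeries, Rb. }
    apply is_pseries_unique. unfold quad_field; cbn [snd].
    replace (b0 cf) with (b0 cf * 1) by ring.
    apply is_pseries_ext with
      (PS_plus (PS_plus (PS_plus (PS_plus (PS_scal (b0 cf) delta0) (PS_scal (b1 cf) a))
         (PS_scal (b2 cf) b)) (PS_scal (b3 cf) (PS_mult a a))) (PS_scal (b4 cf) (PS_mult a b))).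
    { intro n. unfold PS_derive, a, b. rewrite tayl_v_succ. reflexivity. }
    pose proof (is_pseries_mult a a x _ _ Pa Pa Ra Ra) as Paa.
    pose proof (is_pseries_mult a b x _ _ Pa Pb Ra Rb) as Pab.
    exact (is_pseries_plus _ _ _ _ _ (is_pseries_plus _ _ _ _ _ (is_pseries_plus _ _ _ _ _
      (is_pseries_plus _ _ _ _ _ (Hscal _ _ _ (is_pseries_delta0 x)) (Hscal _ _ _ Pa))
      (Hscal _ _ _ Pb)) (Hscal _ _ _ Paa)) (Hscal _ _ _ Pab)).
Qed.

(** * Derivatives on intervals *)

Lemma derivable_pt_lim_eps_cont (f : R -> R) x l : derivable_pt_lim f x l ->
  forall eps, 0 < eps -> exists d, 0 < d /\ forall y, Rabs (y - x) < d -> Rabs (f y - f x) < eps.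
Proof.
  intros H eps He.
  assert (Hc : continuity_pt f x) by (apply derivable_continuous_pt; exists l; exact H).
  destruct (Hc eps He) as [d [Hd Hy]]. exists d. split; [exact Hd|].
  intros y Hyx. destruct (Req_dec x y) as [<-|E].
  - rewrite Rminus_diag, Rabs_R0. exact He.
  - apply (Hy y). repeat split; auto.
Qed.

Lemma derivable_pt_lim_loc_eq (f g : R -> R) x l d : derivable_pt_lim f x l -> 0 < d ->
  (forall y, Rabs (y - x) < d -> g y = f y) -> derivable_pt_lim g x l.
Proof.
  intros H Hd E eps He. destruct (H eps He) as [del Hdel].
  assert (Hm : 0 < Rmin del d) by (apply Rmin_pos; [apply cond_pos|exact Hd]).
  exists (mkposreal _ Hm). intros h Hh Hhd. simpl in Hhd.
  rewrite (E (x + h)), (E x).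
  - apply Hdel; [exact Hh|]. apply Rlt_le_trans with (1 := Hhd), Rmin_l.
  - rewrite Rminus_diag, Rabs_R0. exact Hd.
  - replace (x + h - x) with h by ring. apply Rlt_le_trans with (1 := Hhd), Rmin_r.
Qed.

Lemma derivable_pt_lim_shift (f : R -> R) c x l : derivable_pt_lim f (x - c) l ->
  derivable_pt_lim (fun s => f (s - c)) x l.
Proof.
  intros H eps He. destruct (H eps He) as [del Hdel]. exists del. intros h Hh Hhd.
  replace (x + h - c) with (x - c + h) by ring. apply Hdel; assumption.
Qed.

Lemma derivable_pt_lim_glue (f g : R -> R) x l :
  derivable_pt_lim f x l -> derivable_pt_lim g x l -> f x = g x ->
  derivable_pt_lim (fun s => if Rle_dec s x then f s else g s) x l.
Proof.
  intros Hf Hg E eps He. destruct (Hf eps He) as [d1 H1]. destruct (Hg eps He) as [d2 H2].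
  assert (Hm : 0 < Rmin d1 d2) by (apply Rmin_pos; apply cond_pos).
  exists (mkposreal _ Hm). intros h Hh Hhd. simpl in Hhd.
  destruct (Rle_dec x x) as [_|n]; [|lra].
  destruct (Rle_dec (x + h) x).
  - apply H1; [exact Hh| apply Rlt_le_trans with (1 := Hhd), Rmin_l].
  - rewrite E. apply H2; [exact Hh| apply Rlt_le_trans with (1 := Hhd), Rmin_r].
Qed.

Lemma derivative_lower_bound (f df : R -> R) (a b k : R) : a <= b ->
  (forall x, a <= x <= b -> derivable_pt_lim f x (df x)) ->
  (forall x, a <= x <= b -> k <= df x) -> k * (b - a) <= f b - f a.
Proof.
  intros Hab Hd Hk. destruct (Req_dec a b) as [<-|Hne]; [lra|].
  destruct (MVT_cor2 f df a b ltac:(lra) Hd) as [c [-> Hc]].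
  apply Rmult_le_compat_r; [lra| apply Hk; lra].
Qed.

Lemma derivative_upper_bound (f df : R -> R) (a b k : R) : a <= b ->
  (forall x, a <= x <= b -> derivable_pt_lim f x (df x)) ->
  (forall x, a <= x <= b -> df x <= k) -> f b - f a <= k * (b - a).
Proof.
  intros Hab Hd Hk.
  enough (- k * (b - a) <= - f b - - f a) by lra.
  apply (derivative_lower_bound (fun x => - f x) (fun x => - df x)); [exact Hab| |].
  - intros x Hx. apply derivable_pt_lim_opp, Hd, Hx.
  - intros x Hx. specialize (Hk x Hx). lra.
Qed.

Lemma derivative_pos_increasing (u du : R -> R) a b :
  (forall t, a <= t <= b -> derivable_pt_lim u t (du t)) ->
  (forall t, a <= t <= b -> 0 < du t) ->
  forall x y, a <= x -> x <= y -> y <= b -> u x <= u y.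
Proof.
  intros Hd Hg x y Hx Hxy Hy.
  enough (0 * (y - x) <= u y - u x) by lra.
  apply (derivative_lower_bound u du x y 0 Hxy); intros t Ht.
  - apply Hd; lra.
  - left. apply Hg; lra.
Qed.

Lemma deriv_nonpos_at_first_zero (f : R -> R) tau l : derivable_pt_lim f tau l -> 0 < tau ->
  f tau = 0 -> (forall s, 0 <= s < tau -> 0 < f s) -> l <= 0.
Proof.
  intros Hd Htau Hf0 Hpos.
  destruct (Rle_lt_dec l 0) as [ok|Hl]; [exact ok| exfalso].
  destruct (Hd (l / 2) ltac:(lra)) as [d Hdd]. pose proof (cond_pos d).
  set (h := - Rmin (d / 2) (tau / 2)).
  assert (Hh : 0 < Rmin (d / 2) (tau / 2)) by (apply Rmin_pos; lra).
  pose proof (Rmin_l (d / 2) (tau / 2)). pose proof (Rmin_r (d / 2) (tau / 2)).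
  specialize (Hdd h ltac:(unfold h; lra) ltac:(unfold h; rewrite Rabs_Ropp, Rabs_right; lra)).
  specialize (Hpos (tau + h) ltac:(unfold h; lra)).
  rewrite Hf0, Rminus_0_r in Hdd. apply Rabs_def2 in Hdd.
  assert (f (tau + h) / h < 0) by (apply Rdiv_pos_neg; [lra| unfold h; lra]).
  lra.
Qed.

Lemma le_of_deriv_pos_right (f df : R -> R) tau s : tau < s ->
  (forall eps, 0 < eps -> exists d, 0 < d /\ forall x, tau < x < tau + d -> Rabs (f x - f tau) < eps) ->
  (forall x, tau < x <= s -> derivable_pt_lim f x (df x) /\ 0 < df x) -> f tau <= f s.
Proof.
  intros Hts Hcont Hd.
  destruct (Rle_lt_dec (f tau) (f s)) as [ok|Hlt]; [exact ok| exfalso].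
  destruct (Hcont (f tau - f s) ltac:(lra)) as [d [Hdpos Hnear]].
  set (x := tau + Rmin d (s - tau) / 2).
  assert (Hm : 0 < Rmin d (s - tau)) by (apply Rmin_pos; lra).
  pose proof (Rmin_l d (s - tau)). pose proof (Rmin_r d (s - tau)).
  specialize (Hnear x ltac:(unfold x; lra)). apply Rabs_def2 in Hnear.
  assert (0 * (s - x) <= f s - f x).
  { apply (derivative_lower_bound f df); [unfold x; lra| |]; intros y Hy.
    - apply Hd. unfold x in Hy; lra.
    - left. apply Hd. unfold x in Hy; lra. }
  lra.
Qed.

(** * Extending solutions *)

Definition glue (A : R -> R * R) (t0 : R) (f : R -> R * R) (s : R) : R * R :=
  if Rle_dec s t0 then A s else f (s - t0).

Section Glue.

Variables (F : R -> R -> R * R) (z0 : R * R) (b t0 h : R) (A f : R -> R * R).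
Hypotheses (HA : is_sol F z0 (Some b) A) (Ht0 : 0 < t0 < b) (Hh : 0 < h) (Hmatch : A t0 = f 0)
  (Hf : forall x, Rabs x < h ->
     derivable_pt_lim (fun s => fst (f s)) x (fst (F (fst (f x)) (snd (f x)))) /\
     derivable_pt_lim (fun s => snd (f s)) x (snd (F (fst (f x)) (snd (f x))))).

Lemma glue_tail_deriv t : t0 - h < t < t0 + h ->
  derivable_pt_lim (fun s => fst (f (s - t0))) t (fst (F (fst (f (t - t0))) (snd (f (t - t0))))) /\
  derivable_pt_lim (fun s => snd (f (s - t0))) t (snd (F (fst (f (t - t0))) (snd (f (t - t0))))).
Proof.
  intro Ht. destruct (Hf (t - t0)) as [H1 H2]; [apply Rabs_def1; lra|].
  split; [apply (derivable_pt_lim_shift (fun s => fst (f s)))|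
          apply (derivable_pt_lim_shift (fun s => snd (f s)))]; assumption.
Qed.

Lemma glue_tail_cont t : t0 - h < t < t0 + h -> forall eps, 0 < eps -> exists d, 0 < d /\
  forall s, Rabs (s - t) < d ->
    Rabs (fst (f (s - t0)) - fst (f (t - t0))) < eps /\
    Rabs (snd (f (s - t0)) - snd (f (t - t0))) < eps.
Proof.
  intros Ht eps He. destruct (glue_tail_deriv t Ht) as [H1 H2].
  destruct (derivable_pt_lim_eps_cont _ _ _ H1 eps He) as [d1 [Hd1 C1]].
  destruct (derivable_pt_lim_eps_cont _ _ _ H2 eps He) as [d2 [Hd2 C2]].
  exists (Rmin d1 d2). split; [now apply Rmin_pos|]. intros s Hs. split.
  - apply C1. eapply Rlt_le_trans; [exact Hs| apply Rmin_l].
  - apply C2. eapply Rlt_le_trans; [exact Hs| apply Rmin_r].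
Qed.

Lemma glue_cont t : in_dom (Some (t0 + h)) t -> forall eps, 0 < eps -> exists d, 0 < d /\
  forall s, in_dom (Some (t0 + h)) s -> Rabs (s - t) < d ->
    Rabs (fst (glue A t0 f s) - fst (glue A t0 f t)) < eps /\
    Rabs (snd (glue A t0 f s) - snd (glue A t0 f t)) < eps.
Proof.
  destruct HA as [_ [_ [HAc _]]].
  intros [Ht0' Hth] eps He. unfold glue.
  destruct (Rlt_le_dec t t0) as [Hlt|Hge].
  - destruct (HAc t ltac:(split; lra) eps He) as [d [Hd Hs]].
    exists (Rmin d (t0 - t)). split; [apply Rmin_pos; lra|].
    intros s [Hs0 _] Hst.
    pose proof (Rlt_le_trans _ _ _ Hst (Rmin_l _ _)).
    pose proof (Rlt_le_trans _ _ _ Hst (Rmin_r _ _)) as Hst2. apply Rabs_def2 in Hst2.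
    destruct (Rle_dec s t0); [|lra]. destruct (Rle_dec t t0); [|lra].
    apply Hs; [split; lra| assumption].
  - destruct (glue_tail_cont t ltac:(lra) eps He) as [d1 [Hd1 Hs1]].
    destruct (Rle_lt_or_eq_dec _ _ Hge) as [Hgt|<-].
    + exists (Rmin d1 (t - t0)). split; [apply Rmin_pos; lra|].
      intros s _ Hst.
      pose proof (Rlt_le_trans _ _ _ Hst (Rmin_l _ _)).
      pose proof (Rlt_le_trans _ _ _ Hst (Rmin_r _ _)) as Hst2. apply Rabs_def2 in Hst2.
      destruct (Rle_dec t t0); [lra|]. destruct (Rle_dec s t0); [lra|]. auto.
    + destruct (HAc t0 ltac:(split; lra) eps He) as [d3 [Hd3 Hs3]].
      exists (Rmin d1 d3). split; [now apply Rmin_pos|].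
      intros s [Hs0 _] Hst.
      pose proof (Rlt_le_trans _ _ _ Hst (Rmin_l _ _)).
      pose proof (Rlt_le_trans _ _ _ Hst (Rmin_r _ _)).
      destruct (Rle_dec t0 t0); [|lra]. destruct (Rle_dec s t0).
      * apply Hs3; [split; lra| assumption].
      * rewrite Hmatch, <- (Rminus_diag t0). auto.
Qed.

Lemma glue_deriv t : 0 < t < t0 + h ->
  derivable_pt_lim (fun s => fst (glue A t0 f s)) t
    (fst (F (fst (glue A t0 f t)) (snd (glue A t0 f t)))) /\
  derivable_pt_lim (fun s => snd (glue A t0 f s)) t
    (snd (F (fst (glue A t0 f t)) (snd (glue A t0 f t)))).
Proof.
  destruct HA as [_ [_ [_ HAd]]]. intros Ht.
  destruct (Rlt_le_dec t t0) as [Hlt|Hge].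
  - assert (E : glue A t0 f t = A t) by (unfold glue; destruct (Rle_dec t t0); [reflexivity|lra]).
    rewrite E. destruct (HAd t ltac:(lra) ltac:(split; lra)) as [H1 H2].
    assert (Hloc : forall y, Rabs (y - t) < t0 - t -> glue A t0 f y = A y).
    { intros y Hy. apply Rabs_def2 in Hy. unfold glue. destruct (Rle_dec y t0); [reflexivity|lra]. }
    split; [apply (derivable_pt_lim_loc_eq _ _ t _ (t0 - t) H1)|
            apply (derivable_pt_lim_loc_eq _ _ t _ (t0 - t) H2)];
      try lra; intros y Hy; now rewrite Hloc.
  - destruct (glue_tail_deriv t ltac:(lra)) as [G1 G2].
    destruct (Rle_lt_or_eq_dec _ _ Hge) as [Hgt|<-].
    + assert (E : glue A t0 f t = f (t - t0))
        by (unfold glue; destruct (Rle_dec t t0); [lra|reflexivity]).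
      rewrite E.
      assert (Hloc : forall y, Rabs (y - t) < t - t0 -> glue A t0 f y = f (y - t0)).
      { intros y Hy. apply Rabs_def2 in Hy. unfold glue. destruct (Rle_dec y t0); [lra|reflexivity]. }
      split; [apply (derivable_pt_lim_loc_eq _ _ t _ (t - t0) G1)|
              apply (derivable_pt_lim_loc_eq _ _ t _ (t - t0) G2)];
        try lra; intros y Hy; now rewrite Hloc.
    + assert (E : glue A t0 f t0 = A t0)
        by (unfold glue; destruct (Rle_dec t0 t0); [reflexivity|lra]).
      rewrite E. destruct (HAd t0 ltac:(lra) ltac:(split; lra)) as [H1 H2].
      rewrite Rminus_diag, <- Hmatch in G1, G2.
      assert (Hfst : fst (A t0) = fst (f (t0 - t0))) by now rewrite Rminus_diag, Hmatch.
      assert (Hsnd : snd (A t0) = snd (f (t0 - t0))) by now rewrite Rminus_diag, Hmatch.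
      split.
      * apply (derivable_pt_lim_loc_eq _ _ t0 _ 1 (derivable_pt_lim_glue _ _ _ _ H1 G1 Hfst));
          [lra|]. intros y _. unfold glue. now destruct (Rle_dec y t0).
      * apply (derivable_pt_lim_loc_eq _ _ t0 _ 1 (derivable_pt_lim_glue _ _ _ _ H2 G2 Hsnd));
          [lra|]. intros y _. unfold glue. now destruct (Rle_dec y t0).
Qed.

Lemma is_sol_glue : is_sol F z0 (Some (t0 + h)) (glue A t0 f).
Proof.
  split; [lra|]. split; [|split].
  - unfold glue. destruct (Rle_dec 0 t0); [apply HA| lra].
  - exact glue_cont.
  - intros t Ht [_ Hth]. apply glue_deriv. lra.
Qed.

End Glue.

(* A maximal solution of a quadratic system cannot stay bounded up to a finite end time:
   the local solution from a late enough point, whose existence time only depends on the bound,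
   would extend it. *)
Lemma max_sol_bounded_absurd (cf : quad_coefs) z0 b A D s0 :
  1 <= D -> 0 <= s0 < b ->
  is_max_sol (quad_field cf) z0 (Some b) A ->
  (forall t, s0 <= t < b -> Rabs (fst (A t)) <= D /\ Rabs (snd (A t)) <= D) -> False.
Proof.
  intros HD Hs0 [Hsol Hmax] Hbd.
  destruct (quad_field_local_sol cf D HD) as [h [Hh Hloc]].
  set (t0 := Rmax s0 (Rmax (b / 2) (b - h / 2))).
  assert (Ht0 : s0 <= t0 /\ 0 < t0 < b /\ b < t0 + h).
  { unfold t0. pose proof (Rmax_l s0 (Rmax (b / 2) (b - h / 2))).
    pose proof (Rmax_l (b / 2) (b - h / 2)). pose proof (Rmax_r (b / 2) (b - h / 2)).
    pose proof (Rmax_r s0 (Rmax (b / 2) (b - h / 2))).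
    assert (Rmax s0 (Rmax (b / 2) (b - h / 2)) < b)
      by (apply Rmax_lub_lt; [lra| apply Rmax_lub_lt; lra]). lra. }
  destruct (Hbd t0 ltac:(lra)) as [Hu0 Hv0].
  destruct (Hloc _ _ Hu0 Hv0) as [f [Hf0 Hf]].
  apply (Hmax (t0 + h) ltac:(lra) (glue A t0 f)).
  apply (is_sol_glue _ _ b); auto; try lra.
  now rewrite Hf0, <- surjective_pairing.
Qed.

(** * Continuity of solutions and first hitting times *)

Lemma sol_cont F z0 T A (a b : R) t : is_sol F z0 T A -> in_dom T t ->
  forall eps, 0 < eps -> exists d, 0 < d /\ forall s, in_dom T s -> Rabs (s - t) < d ->
    Rabs (fst (A s) - fst (A t)) < eps /\ Rabs (snd (A s) - snd (A t)) < eps /\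
    Rabs ((a * fst (A s) + b * snd (A s)) - (a * fst (A t) + b * snd (A t))) < eps.
Proof.
  intros [_ [_ [Hc _]]] Ht eps He.
  set (e := eps / (1 + Rabs a + Rabs b)).
  assert (Hab : 0 < 1 + Rabs a + Rabs b) by (pose proof (Rabs_pos a); pose proof (Rabs_pos b); lra).
  assert (He' : 0 < e) by (apply Rdiv_lt_0_compat; lra).
  assert (Hee : (1 + Rabs a + Rabs b) * e = eps) by (unfold e; field; lra).
  destruct (Hc t Ht e He') as [d [Hd Hs]]. exists d. split; [exact Hd|].
  intros s Hs' Hst. destruct (Hs s Hs' Hst) as [H1 H2].
  pose proof (Rabs_pos a); pose proof (Rabs_pos b).
  assert (e <= eps) by nra.
  split; [lra|]. split; [lra|].
  replace ((a * fst (A s) + b * snd (A s)) - (a * fst (A t) + b * snd (A t)))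
    with (a * (fst (A s) - fst (A t)) + b * (snd (A s) - snd (A t))) by ring.
  eapply Rle_lt_trans; [apply Rabs_triang|]. rewrite !Rabs_mult.
  pose proof (Rmult_le_compat_l _ _ _ (Rabs_pos a) (Rlt_le _ _ H1)).
  pose proof (Rmult_le_compat_l _ _ _ (Rabs_pos b) (Rlt_le _ _ H2)).
  nra.
Qed.

Lemma sol_lin_nonneg F z0 T A (a b tau : R) : is_sol F z0 T A -> in_dom T tau -> 0 < tau ->
  (forall s, 0 <= s < tau -> 0 <= a * fst (A s) + b * snd (A s)) ->
  0 <= a * fst (A tau) + b * snd (A tau).
Proof.
  intros Hsol Hdom Htau Hpos.
  destruct (Rle_lt_dec 0 (a * fst (A tau) + b * snd (A tau))) as [ok|Hneg]; [exact ok| exfalso].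
  destruct (sol_cont _ _ _ _ a b tau Hsol Hdom _ (Ropp_0_gt_lt_contravar _ Hneg)) as [d [Hd Hs]].
  set (s := Rmax 0 (tau - d / 2)).
  assert (0 <= s) by apply Rmax_l. assert (tau - d / 2 <= s) by apply Rmax_r.
  assert (s < tau) by (apply Rmax_lub_lt; lra).
  assert (Hsd : in_dom T s) by (split; [lra|]; destruct T; [destruct Hdom; lra| exact I]).
  destruct (Hs s Hsd ltac:(apply Rabs_def1; lra)) as [_ [_ H3]].
  apply Rabs_def2 in H3. specialize (Hpos s ltac:(lra)). lra.
Qed.

Lemma sol_start_bounded F z0 T A M : is_sol F z0 T A ->
  Rabs (fst z0) <= M -> Rabs (snd z0) <= M ->
  exists s0, 0 < s0 <= 1 /\ in_dom T s0 /\
    Rabs (fst (A s0)) <= M + 1 /\ Rabs (snd (A s0)) <= M + 1.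
Proof.
  intros Hsol Hu0 Hv0.
  assert (HA0 : A 0 = z0) by apply Hsol.
  assert (Hdom0 : in_dom T 0) by (split; [lra|]; destruct T; [apply Hsol| exact I]).
  destruct (sol_cont _ _ _ _ 0 0 0 Hsol Hdom0 1 ltac:(lra)) as [d [Hd Hs]].
  set (bT := match T with Some b => b / 2 | None => 1 end).
  assert (HbT : 0 < bT) by (unfold bT; destruct T; [destruct Hsol; lra| lra]).
  set (s0 := Rmin (Rmin 1 (d / 2)) bT).
  assert (Hs0 : 0 < s0) by (unfold s0; repeat apply Rmin_pos; lra).
  assert (s0 <= Rmin 1 (d / 2)) by apply Rmin_l.
  assert (s0 <= bT) by apply Rmin_r.
  pose proof (Rmin_l 1 (d / 2)). pose proof (Rmin_r 1 (d / 2)).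
  assert (Hdoms0 : in_dom T s0) by (split; [lra|]; unfold bT in *; destruct T; [destruct Hsol; lra| exact I]).
  exists s0. split; [lra|]. split; [exact Hdoms0|].
  destruct (Hs s0 Hdoms0 ltac:(rewrite Rminus_0_r, Rabs_right; lra)) as [Hu [Hv _]].
  rewrite HA0 in Hu, Hv.
  pose proof (Rabs_triang_inv (fst (A s0)) (fst z0)).
  pose proof (Rabs_triang_inv (snd (A s0)) (snd z0)). lra.
Qed.

Lemma is_glb_exists (S : R -> Prop) :
  (exists t, S t) -> (forall t, S t -> 0 <= t) -> exists m, is_glb S m.
Proof.
  intros [t0 Ht0] Hpos.
  destruct (completeness (fun x => S (- x))) as [m [Hub Hlub]].
  - exists 0. intros x Hx. specialize (Hpos _ Hx). lra.
  - exists (- t0). now rewrite Ropp_involutive.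
  - exists (- m). split.
    + intros x Hx. enough (- x <= m) by lra. apply Hub. now rewrite Ropp_involutive.
    + intros m' Hm'. enough (m <= - m') by lra.
      apply Hlub. intros x Hx. specialize (Hm' _ Hx). lra.
Qed.

Lemma is_glb_gap_absurd (S : R -> Prop) tau d : is_glb S tau -> 0 < d ->
  (forall t, tau <= t < tau + d -> ~ S t) -> False.
Proof.
  intros [Hlb Hglb] Hd Hgap.
  enough (tau + d <= tau) by lra.
  apply Hglb. intros t Ht. specialize (Hlb t Ht).
  destruct (Rlt_le_dec t (tau + d)) as [Hl|Hl]; [|exact Hl].
  exfalso. exact (Hgap t (conj Hlb Hl) Ht).
Qed.

Lemma first_hit_props (T : option R) (A : R -> R * R) (Q : R * R -> Prop) tau :
  is_glb (fun t => in_dom T t /\ Q (A t)) tau ->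
  in_dom T tau /\ forall s, 0 <= s < tau -> in_dom T s /\ ~ Q (A s).
Proof.
  intros Htau. pose proof Htau as [Hlb Hglb].
  assert (Hne : exists t, in_dom T t /\ Q (A t)).
  { apply NNPP. intro Hn. enough (tau + 1 <= tau) by lra.
    apply Hglb. intros x Hx. exfalso. apply Hn. now exists x. }
  destruct Hne as [t1 [Ht1 HQ1]].
  assert (Htau0 : 0 <= tau) by (apply Hglb; intros t [[Ht _] _]; exact Ht).
  assert (Htau1 : tau <= t1) by (apply Hlb; split; assumption).
  assert (Hdom : forall s, 0 <= s <= tau -> in_dom T s)
    by (intros s Hs; split; [lra|]; destruct T; [destruct Ht1; lra| exact I]).
  split; [apply Hdom; lra|].
  intros s Hs. split; [apply Hdom; lra|]. intro HQ.
  assert (tau <= s) by (apply Hlb; split; [apply Hdom; lra| exact HQ]). lra.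
Qed.

Lemma first_hit_le (T : option R) (A : R -> R * R) (Q : R * R -> Prop) t T0 :
  in_dom T t -> Q (A t) -> t <= T0 ->
  exists tau, is_glb (fun s => in_dom T s /\ Q (A s)) tau /\ tau <= T0.
Proof.
  intros Ht HQ HT0.
  destruct (is_glb_exists (fun s => in_dom T s /\ Q (A s)) ltac:(exists t; split; assumption)
             ltac:(intros s [[Hs _] _]; exact Hs)) as [m Hm].
  exists m. split; [exact Hm|]. destruct Hm as [Hlb _].
  assert (m <= t) by (apply Hlb; split; assumption). lra.
Qed.

(** * The phase plane [(u, g)] *)

Definition gdot (P beta K c : R) (u g : R) : R :=
  - P * g + 2 * beta * P * K * (c - u) - 2 * beta * (K + P * u) * g.

Definition phase_rate (P beta K delta : R) : R := 2 * beta * P * K * delta.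

Definition approach_time (P beta K c delta M : R) : R :=
  (1 + (P + 2 * beta * (K + P * c)) * (M + c)) / phase_rate P beta K delta + M + c + 1.

Definition g_bound (P beta K c M G t : R) : R :=
  G + (P + 2 * beta * K) * M + beta * P * (M * M) + 2 * beta * P * K * (c + M) * t
  + (P + 2 * beta * K) * (P + 2 * beta * K) / (4 * beta * P).

(* [approach_time] brings [u] above [c - delta], two more time units bring it above
   [c + delta], and then [g <= g_bound] falls to [0] at rate at least [phase_rate]. *)
Definition exit_time (P beta K c delta M G : R) : R :=
  approach_time P beta K c delta M + 2
  + g_bound P beta K c M G (approach_time P beta K c delta M + 2) / phase_rate P beta K delta + 1.

Lemma phase_rate_pos P beta K delta : 0 < P -> 0 < beta -> 0 < K -> 0 < delta ->
  0 < phase_rate P beta K delta.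
Proof. intros. unfold phase_rate. repeat apply Rmult_lt_0_compat; lra. Qed.

Lemma approach_time_pos P beta K c delta M : 0 < P -> 0 < beta -> 0 < K -> 0 < c ->
  0 < delta -> 0 <= M -> 0 < approach_time P beta K c delta M.
Proof.
  intros HP Hb HK Hc Hdel HM. unfold approach_time.
  assert (0 < P * c) by (apply Rmult_lt_0_compat; lra).
  assert (0 < beta * (K + P * c)) by (apply Rmult_lt_0_compat; lra).
  assert (0 < (P + 2 * beta * (K + P * c)) * (M + c)) by (apply Rmult_lt_0_compat; lra).
  assert (0 < (1 + (P + 2 * beta * (K + P * c)) * (M + c)) / phase_rate P beta K delta)
    by (apply Rdiv_lt_0_compat; [lra| apply phase_rate_pos; assumption]).
  lra.
Qed.

Lemma g_bound_nonneg P beta K c M G t : 0 < P -> 0 < beta -> 0 < K -> 0 < c -> 0 <= M ->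
  0 <= G -> 0 <= t -> 0 <= g_bound P beta K c M G t.
Proof.
  intros HP Hb HK Hc HM HG Ht. unfold g_bound.
  assert (0 <= (P + 2 * beta * K) * M) by (apply Rmult_le_pos; nra).
  assert (0 <= beta * P * (M * M)) by (apply Rmult_le_pos; nra).
  assert (0 <= 2 * beta * P * K * (c + M) * t) by (repeat apply Rmult_le_pos; lra).
  assert (0 <= (P + 2 * beta * K) * (P + 2 * beta * K) / (4 * beta * P))
    by (apply Rdiv_le_0_compat; [apply Rle_0_sqr| nra]).
  lra.
Qed.

Lemma exit_time_pos P beta K c delta M G : 0 < P -> 0 < beta -> 0 < K -> 0 < c ->
  0 < delta -> 0 <= M -> 0 <= G -> 0 < exit_time P beta K c delta M G.
Proof.
  intros. unfold exit_time.
  pose proof (approach_time_pos P beta K c delta M) as HT1.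
  assert (0 <= g_bound P beta K c M G (approach_time P beta K c delta M + 2) /
               phase_rate P beta K delta).
  { apply Rdiv_le_0_compat; [apply g_bound_nonneg; auto; lra|].
    apply phase_rate_pos; assumption. }
  lra.
Qed.

Lemma phase_energy_deriv (P beta K c : R) (u g : R -> R) t :
  derivable_pt_lim u t (g t) -> derivable_pt_lim g t (gdot P beta K c (u t) (g t)) ->
  derivable_pt_lim (fun s => g s + (P + 2 * beta * K) * u s + beta * P * (u s * u s)) t
     (2 * beta * P * K * (c - u t)).
Proof.
  intros Hu Hg.
  assert (H := derivable_pt_lim_plus _ _ t _ _
    (derivable_pt_lim_plus _ _ t _ _ Hg (derivable_pt_lim_scal _ (P + 2 * beta * K) t _ Hu))
    (derivable_pt_lim_scal _ (beta * P) t _ (derivable_pt_lim_mult _ _ t _ _ Hu Hu))).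
  unfold plus_fct, mult_real_fct, mult_fct in H.
  replace (2 * beta * P * K * (c - u t)) with
    (gdot P beta K c (u t) (g t) + (P + 2 * beta * K) * g t + beta * P * (g t * u t + u t * g t))
    by (unfold gdot; ring).
  exact H.
Qed.

Lemma phase_v_bound P beta u v U G : 0 < P -> 0 < beta -> Rabs u <= U ->
  0 <= - P * u + beta * v <= G -> Rabs v <= (G + P * U) / beta.
Proof.
  intros HP Hb Hu Hg.
  replace v with ((- P * u + beta * v + P * u) / beta) by (field; lra).
  unfold Rdiv. rewrite Rabs_mult, (Rabs_right (/ beta)) by (left; apply Rinv_0_lt_compat, Hb).
  apply Rmult_le_compat_r; [left; apply Rinv_0_lt_compat, Hb|].
  eapply Rle_trans; [apply Rabs_triang|]. rewrite Rabs_mult, (Rabs_right P), Rabs_right by lra.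
  pose proof (Rmult_le_compat_l _ _ _ (Rlt_le _ _ HP) Hu). lra.
Qed.

Section PhasePlane.

Variables (P beta K c : R) (u g : R -> R) (s0 S : R).
Hypotheses (HP : 0 < P) (Hb : 0 < beta) (HK : 0 < K) (Hc : 0 < c)
  (Hd : forall t, s0 <= t <= S ->
     derivable_pt_lim u t (g t) /\ derivable_pt_lim g t (gdot P beta K c (u t) (g t)))
  (Hg : forall t, s0 <= t <= S -> 0 < g t).

Lemma phase_u_increasing x y : s0 <= x -> x <= y -> y <= S -> u x <= u y.
Proof. apply (derivative_pos_increasing u g s0 S); [intros t Ht; apply Hd, Ht| exact Hg]. Qed.

Lemma phase_g_bound M G : 0 <= M -> Rabs (u s0) <= M -> g s0 <= G ->
  forall t, s0 <= t <= S -> g t <= g_bound P beta K c M G (t - s0).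
Proof.
  intros HM Hu0 Hg0 t Ht. apply Rabs_le_between in Hu0.
  set (L := P + 2 * beta * K).
  set (H := fun s => g s + L * u s + beta * P * (u s * u s)).
  assert (HbP : 0 < beta * P) by nra.
  assert (HH : H t - H s0 <= 2 * beta * P * K * (c + M) * (t - s0)).
  { apply (derivative_upper_bound H (fun s => 2 * beta * P * K * (c - u s))); [lra| |].
    - intros x Hx. destruct (Hd x ltac:(lra)). apply phase_energy_deriv; assumption.
    - intros x Hx. assert (u s0 <= u x) by (apply phase_u_increasing; lra).
      apply Rmult_le_compat_l; [| lra]. repeat apply Rmult_le_pos; lra. }
  assert (HH0 : H s0 <= G + L * M + beta * P * (M * M)).
  { unfold H. assert (0 < L) by (unfold L; nra).
    assert (u s0 * u s0 <= M * M) by nra. nra. }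
  (* [g <= H + L^2 / (4 beta P)] by completing the square in [u] *)
  assert (Hq : g t <= H t + L * L / (4 * beta * P)).
  { unfold H.
    assert (E : L * L / (4 * beta * P) + L * u t + beta * P * (u t * u t) =
                beta * P * ((u t + L / (2 * beta * P)) * (u t + L / (2 * beta * P))))
      by (field; lra).
    pose proof (Rmult_le_pos _ _ (Rlt_le _ _ HbP) (Rle_0_sqr (u t + L / (2 * beta * P)))).
    unfold Rsqr in *. lra. }
  unfold g_bound. fold L. lra.
Qed.

(* While [u <= c - delta], [g + (P + 2 beta (K + P c)) u] grows at rate [phase_rate], so
   [g >= 1] after a bounded time, and then [u] climbs by at least one per unit time. *)
Lemma phase_approach delta M : 0 < delta -> 0 <= M -> Rabs (u s0) <= M ->
  s0 + approach_time P beta K c delta M <= S ->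
  c - delta < u (s0 + approach_time P beta K c delta M).
Proof.
  intros Hdel HM Hu0 HS. apply Rabs_le_between in Hu0.
  set (C := P + 2 * beta * (K + P * c)). set (a := phase_rate P beta K delta).
  set (s1 := s0 + approach_time P beta K c delta M) in *.
  assert (Ha : 0 < a) by (unfold a, phase_rate; repeat apply Rmult_lt_0_compat; lra).
  assert (HC : 0 < C).
  { assert (0 < P * c) by (apply Rmult_lt_0_compat; lra).
    assert (0 < beta * (K + P * c)) by (apply Rmult_lt_0_compat; lra). unfold C; lra. }
  assert (HCM : 0 < C * (M + c)) by (apply Rmult_lt_0_compat; lra).
  assert (Hx1pos : 0 < (1 + C * (M + c)) / a) by (apply Rdiv_lt_0_compat; lra).
  set (x1 := s0 + (1 + C * (M + c)) / a).
  assert (Hx1 : s0 <= x1 <= s1) by (unfold x1, s1, approach_time; fold C a; lra).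
  destruct (Rlt_le_dec (c - delta) (u s1)) as [ok|Hbad]; [exact ok| exfalso].
  assert (Hle : forall x, s0 <= x <= s1 -> u x <= c - delta).
  { intros x Hx. apply Rle_trans with (u s1); [apply phase_u_increasing; lra| exact Hbad]. }
  assert (Hlin : forall x, s0 <= x <= s1 -> a * (x - s0) <= (g x + C * u x) - (g s0 + C * u s0)).
  { intros x Hx.
    apply (derivative_lower_bound (fun s => g s + C * u s)
             (fun s => gdot P beta K c (u s) (g s) + C * g s)); [lra| |].
    - intros y Hy. destruct (Hd y ltac:(lra)) as [H1 H2].
      apply derivable_pt_lim_plus; [exact H2| apply derivable_pt_lim_scal, H1].
    - intros y Hy. specialize (Hle y ltac:(lra)). assert (0 < g y) by (apply Hg; lra).
      unfold gdot, a, C, phase_rate.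
      assert (0 <= 2 * beta * g y * (P * c - P * u y)) by (apply Rmult_le_pos; nra).
      assert (2 * beta * P * K * delta <= 2 * beta * P * K * (c - u y))
        by (apply Rmult_le_compat_l; [repeat apply Rmult_le_pos|]; lra).
      nra. }
  assert (Hg1 : forall x, x1 <= x <= s1 -> 1 <= g x).
  { intros x Hx. specialize (Hlin x ltac:(lra)). specialize (Hle x ltac:(lra)).
    assert (0 < g s0) by (apply Hg; lra).
    assert (a * (x1 - s0) = 1 + C * (M + c)) by (unfold x1; field; lra).
    assert (a * (x1 - s0) <= a * (x - s0)) by (apply Rmult_le_compat_l; lra).
    assert (C * u x <= C * c) by (apply Rmult_le_compat_l; lra).
    assert (C * (- M) <= C * u s0) by (apply Rmult_le_compat_l; lra).
    nra. }
  assert (Hclimb : 1 * (s1 - x1) <= u s1 - u x1).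
  { apply (derivative_lower_bound u g); [lra| intros y Hy; apply Hd; lra| exact Hg1]. }
  assert (u s0 <= u x1) by (apply phase_u_increasing; lra).
  assert (s1 - x1 = M + c + 1) by (unfold s1, x1, approach_time; fold C a; ring).
  lra.
Qed.

Lemma phase_cross delta s1 : 0 < delta -> s0 <= s1 -> s1 + 2 <= S -> c - delta < u s1 ->
  (forall t, s1 <= t <= s1 + 2 -> ~ (Rabs (u t - c) < delta /\ g t < delta)) ->
  c + delta <= u (s1 + 2).
Proof.
  intros Hdel Hs1 HS Hu1 Hgood.
  destruct (Rle_lt_dec (c + delta) (u (s1 + 2))) as [ok|Hbad]; [exact ok| exfalso].
  assert (Hslow : forall x, s1 <= x <= s1 + 2 -> delta <= g x).
  { intros x Hx.
    assert (u s1 <= u x) by (apply phase_u_increasing; lra).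
    assert (u x <= u (s1 + 2)) by (apply phase_u_increasing; lra).
    destruct (Rlt_le_dec (g x) delta) as [Hl|Hl]; [|exact Hl].
    exfalso. apply (Hgood x Hx). split; [apply Rabs_def1; lra| exact Hl]. }
  assert (delta * (s1 + 2 - s1) <= u (s1 + 2) - u s1)
    by (apply (derivative_lower_bound u g); [lra| intros y Hy; apply Hd; lra| exact Hslow]).
  lra.
Qed.

Lemma phase_descent delta s2 G : 0 < delta -> 0 <= G -> s0 <= s2 -> c + delta <= u s2 ->
  g s2 <= G -> s2 + G / phase_rate P beta K delta + 1 <= S -> False.
Proof.
  intros Hdel HG0 Hs2 Hu2 Hg2 HS. set (a := phase_rate P beta K delta) in *.
  set (s3 := s2 + G / a + 1).
  assert (Ha : 0 < a) by (unfold a, phase_rate; repeat apply Rmult_lt_0_compat; lra).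
  assert (0 <= G / a) by (apply Rdiv_le_0_compat; lra).
  assert (HG : 0 < G) by (pose proof (Hg s2 ltac:(unfold s3 in *; lra)); lra).
  assert (Hdrop : g s3 - g s2 <= - a * (s3 - s2)).
  { assert (0 < G / a) by (apply Rdiv_lt_0_compat; lra).
    apply (derivative_upper_bound g (fun s => gdot P beta K c (u s) (g s))); [unfold s3; lra| |].
    - intros y Hy. apply Hd. unfold s3 in Hy; lra.
    - intros y Hy. assert (Hy' : s0 <= y <= S) by (unfold s3 in Hy; lra).
      assert (u s2 <= u y) by (apply phase_u_increasing; lra).
      assert (0 < g y) by (apply Hg, Hy').
      unfold gdot, a, phase_rate.
      assert (0 < P * u y) by (apply Rmult_lt_0_compat; lra).
      assert (0 <= 2 * beta * (K + P * u y) * g y) by (apply Rmult_le_pos; nra).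
      assert (2 * beta * P * K * (c - u y) <= 2 * beta * P * K * (- delta))
        by (apply Rmult_le_compat_l; [repeat apply Rmult_le_pos|]; lra).
      assert (0 < P * g y) by (apply Rmult_lt_0_compat; lra).
      lra. }
  assert (a * (s3 - s2) = G + a) by (unfold s3; field; lra).
  assert (0 < g s3) by (apply Hg; unfold s3; lra).
  lra.
Qed.

Lemma phase_exit_absurd delta M G : 0 < delta -> 0 <= M ->
  (forall t, s0 <= t <= S -> ~ (Rabs (u t - c) < delta /\ g t < delta)) ->
  Rabs (u s0) <= M -> g s0 <= G -> s0 <= S -> s0 + exit_time P beta K c delta M G <= S -> False.
Proof.
  intros Hdel HM Hgood Hu0 Hg0 Hs0 HS. unfold exit_time in HS.
  set (T1 := approach_time P beta K c delta M) in *.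
  set (G2 := g_bound P beta K c M G (T1 + 2)) in *.
  assert (Ha : 0 < phase_rate P beta K delta) by (apply phase_rate_pos; assumption).
  assert (HT1 : 0 < T1) by (apply approach_time_pos; assumption).
  assert (HG2 : 0 <= G2)
    by (apply g_bound_nonneg; try lra; pose proof (Hg s0 ltac:(lra)); lra).
  assert (0 <= G2 / phase_rate P beta K delta) by (apply Rdiv_le_0_compat; lra).
  assert (Hu1 : c - delta < u (s0 + T1)) by (unfold T1; apply phase_approach; auto; fold T1; lra).
  assert (Hu2 : c + delta <= u (s0 + T1 + 2))
    by (apply phase_cross; auto; try lra; intros t Ht; apply Hgood; lra).
  apply (phase_descent delta (s0 + T1 + 2) G2); auto; try lra.
  unfold G2. replace (T1 + 2) with (s0 + T1 + 2 - s0) by ring.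
  apply phase_g_bound; auto; lra.
Qed.

Lemma phase_bounded M G L : 0 <= M -> Rabs (u s0) <= M -> g s0 <= G -> s0 <= S -> S - s0 <= L ->
  forall t, s0 <= t <= S ->
    Rabs (u t) <= M + g_bound P beta K c M G L * L /\ 0 < g t <= g_bound P beta K c M G L.
Proof.
  intros HM Hu0 Hg0 HS HL t Ht. set (Gx := g_bound P beta K c M G L).
  assert (Hgx : forall x, s0 <= x <= S -> g x <= Gx).
  { intros x Hx.
    apply Rle_trans with (g_bound P beta K c M G (x - s0)); [apply phase_g_bound; auto|].
    unfold Gx, g_bound.
    assert (2 * beta * P * K * (c + M) * (x - s0) <= 2 * beta * P * K * (c + M) * L)
      by (apply Rmult_le_compat_l; [repeat apply Rmult_le_pos|]; lra).
    lra. }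
  assert (HGx : 0 < Gx) by (pose proof (Hg s0 ltac:(lra)); pose proof (Hgx s0 ltac:(lra)); lra).
  assert (u s0 <= u t) by (apply phase_u_increasing; lra).
  assert (u t - u s0 <= Gx * (t - s0))
    by (apply (derivative_upper_bound u g); [lra| intros y Hy; apply Hd; lra| intros y Hy; apply Hgx; lra]).
  assert (Gx * (t - s0) <= Gx * L) by (apply Rmult_le_compat_l; lra).
  apply Rabs_le_between in Hu0.
  split; [apply Rabs_le_between; nra| split; [apply Hg| apply Hgx]; lra].
Qed.

End PhasePlane.

(** * The model field *)

Definition model_coefs (P beta K : R) : quad_coefs :=
  QuadCoefs (- P) beta (2 * P * (P - 1)) 0 (- 2 * K * beta) (2 * P ^ 2) (- 2 * P * beta).

Lemma FL_model p beta Lam : beta <> 0 ->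
  FL p beta Lam = quad_field (model_coefs (INR p) beta ((INR p - 1) / beta + Lam)).
Proof.
  intro Hb. apply functional_extensionality; intro u. apply functional_extensionality; intro v.
  unfold FL, F1, F2L, quad_field, model_coefs; cbn. f_equal; field; exact Hb.
Qed.

Lemma FU_model p beta Lam : beta <> 0 ->
  FU p beta Lam = quad_field (model_coefs (INR p) beta ((INR p - 1) / beta - Lam)).
Proof.
  intro Hb. apply functional_extensionality; intro u. apply functional_extensionality; intro v.
  unfold FU, F1, F2U, quad_field, model_coefs; cbn. f_equal; field; exact Hb.
Qed.

Lemma model_sol_derivs (P beta K : R) z0 T A t : K <> 0 ->
  is_sol (quad_field (model_coefs P beta K)) z0 T A -> 0 < t -> in_dom T t ->
  derivable_pt_lim (fun s => fst (A s)) t (- P * fst (A t) + beta * snd (A t)) /\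
  derivable_pt_lim (fun s => - P * fst (A s) + beta * snd (A s)) t
     (gdot P beta K ((P - 1) / K) (fst (A t)) (- P * fst (A t) + beta * snd (A t))) /\
  derivable_pt_lim (fun s => snd (A s)) t
     (snd (quad_field (model_coefs P beta K) (fst (A t)) (snd (A t)))).
Proof.
  intros HK [_ [_ [_ Hd]]] Ht Hdom. destruct (Hd t Ht Hdom) as [H1 H2].
  cbn in H1. split; [exact H1|]. split; [|exact H2].
  assert (H := derivable_pt_lim_plus _ _ t _ _ (derivable_pt_lim_scal _ (- P) t _ H1)
                 (derivable_pt_lim_scal _ beta t _ H2)).
  unfold plus_fct, mult_real_fct in H.
  replace (gdot P beta K ((P - 1) / K) (fst (A t)) (- P * fst (A t) + beta * snd (A t)))
    with (- P * (- P * fst (A t) + beta * snd (A t))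
          + beta * snd (quad_field (model_coefs P beta K) (fst (A t)) (snd (A t))))
    by (unfold gdot, quad_field, model_coefs; cbn; field; exact HK).
  exact H.
Qed.

Lemma model_F2_pos (P beta K u v U : R) : 1 < P -> 0 < beta -> 0 < K -> Rabs u <= U ->
  Rabs v < P * (P - 1) / (beta * (K + P * U)) -> 0 < snd (quad_field (model_coefs P beta K) u v).
Proof.
  intros HP Hb HK Hu Hv. unfold quad_field, model_coefs; cbn [snd c1 c2 b0 b1 b2 b3 b4].
  assert (HU : 0 <= U) by (pose proof (Rabs_pos u); lra).
  assert (HKU : 0 < K + P * U) by nra.
  assert (Hden : 0 < beta * (K + P * U)) by (apply Rmult_lt_0_compat; lra).
  assert (Hbv : beta * (K + P * U) * Rabs v < P * (P - 1)).
  { apply (Rmult_lt_compat_l (beta * (K + P * U))) in Hv; [|exact Hden].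
    replace (beta * (K + P * U) * (P * (P - 1) / (beta * (K + P * U)))) with (P * (P - 1)) in Hv
      by (field; lra).
    exact Hv. }
  assert (Huv : u * v <= U * Rabs v).
  { apply Rle_trans with (Rabs u * Rabs v).
    - rewrite <- Rabs_mult. apply Rle_abs.
    - apply Rmult_le_compat_r; [apply Rabs_pos| exact Hu]. }
  pose proof (Rle_abs v). pose proof (pow2_ge_0 u).
  assert (K * beta * v <= K * beta * Rabs v) by (apply Rmult_le_compat_l; nra).
  assert (P * beta * (u * v) <= P * beta * (U * Rabs v)) by (apply Rmult_le_compat_l; nra).
  assert (0 <= P ^ 2 * u ^ 2) by (apply Rmult_le_pos; [apply pow2_ge_0| lra]).
  nra.
Qed.

Lemma model_exit_right (P beta K : R) z0 T A tau : 0 < P -> 0 < beta -> 0 < K ->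
  is_sol (quad_field (model_coefs P beta K)) z0 T A -> 0 < tau -> in_dom T tau ->
  - P * fst (A tau) + beta * snd (A tau) = 0 ->
  (forall s, 0 <= s < tau -> 0 < - P * fst (A s) + beta * snd (A s)) ->
  (P - 1) / K <= fst (A tau).
Proof.
  intros HP Hb HK Hsol Ht Hdom Hg0 Hpos.
  destruct (model_sol_derivs P beta K z0 T A tau ltac:(lra) Hsol Ht Hdom) as [_ [Hg _]].
  pose proof (deriv_nonpos_at_first_zero _ _ _ Hg Ht Hg0 Hpos) as Hle.
  rewrite Hg0 in Hle. unfold gdot in Hle.
  assert (0 < 2 * beta * P * K) by (repeat apply Rmult_lt_0_compat; lra).
  nra.
Qed.

Section ModelExit.

Variables (p : nat) (beta K : R) (z0 : R * R) (T : option R) (A : R -> R * R).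
Hypotheses (HP : 1 < INR p) (Hb : 0 < beta) (HK : 0 < K)
  (Hsol : is_sol (quad_field (model_coefs (INR p) beta K)) z0 T A).

(* On the axis [{v = 0}] with [g > 0] the [v]-component of the field is positive, so the
   solution moves into [{v > 0}]. *)
Lemma model_stays_in_Wplus_axis tau : in_dom T tau ->
  0 < F1 p beta (fst (A tau)) (snd (A tau)) -> snd (A tau) = 0 ->
  exists d, 0 < d /\ forall s, in_dom T s -> tau <= s < tau + d -> Wplus p beta (A s).
Proof.
  intros Hdomt Hgp Hv0. unfold Wplus, F1 in *. set (P := INR p) in *.
  set (U := Rabs (fst (A tau)) + 1).
  set (eta := P * (P - 1) / (beta * (K + P * U))).
  assert (Heta : 0 < eta).
  { unfold eta. pose proof (Rabs_pos (fst (A tau))).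
    apply Rdiv_lt_0_compat; [nra| apply Rmult_lt_0_compat; [lra| unfold U; nra]]. }
  set (eps := Rmin (- P * fst (A tau) + beta * snd (A tau)) (Rmin 1 eta)).
  assert (Heps : 0 < eps) by (unfold eps; repeat apply Rmin_pos; lra).
  assert (eps <= - P * fst (A tau) + beta * snd (A tau)) by apply Rmin_l.
  assert (eps <= Rmin 1 eta) by apply Rmin_r.
  pose proof (Rmin_l 1 eta). pose proof (Rmin_r 1 eta).
  destruct (sol_cont _ _ _ _ (- P) beta tau Hsol Hdomt eps Heps) as [d [Hd Hs]].
  assert (Hloc : forall s, in_dom T s -> Rabs (s - tau) < d ->
    0 < - P * fst (A s) + beta * snd (A s) /\
    0 < snd (quad_field (model_coefs P beta K) (fst (A s)) (snd (A s)))).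
  { intros s Hsd Hst. destruct (Hs s Hsd Hst) as [Hu [Hv Hg]].
    apply Rabs_def2 in Hg. split; [lra|].
    apply (model_F2_pos P beta K _ _ U); try lra.
    - pose proof (Rabs_triang_inv (fst (A s)) (fst (A tau))). unfold U. lra.
    - rewrite Hv0, Rminus_0_r in Hv. fold eta. lra. }
  exists d. split; [exact Hd|]. intros s Hsd [Hs1 Hs2].
  split; [| apply Rlt_gt, Hloc; [exact Hsd| apply Rabs_def1; lra]].
  destruct (Req_dec s tau) as [->|Hne]; [lra|]. rewrite <- Hv0.
  assert (Hdom : forall x, tau <= x <= s -> in_dom T x)
    by (intros x Hx; split; [destruct Hdomt; lra| destruct T; [destruct Hsd; lra| exact I]]).
  apply (le_of_deriv_pos_right (fun x => snd (A x))
           (fun x => snd (quad_field (model_coefs P beta K) (fst (A x)) (snd (A x))))); [lra| |].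
  - intros e He. destruct (sol_cont _ _ _ _ 0 0 tau Hsol Hdomt e He) as [d' [Hd' Hs']].
    exists (Rmin d' (s - tau)). split; [apply Rmin_pos; lra|]. intros x Hx.
    pose proof (Rmin_l d' (s - tau)). pose proof (Rmin_r d' (s - tau)).
    apply (Hs' x); [apply Hdom| apply Rabs_def1]; lra.
  - intros x Hx. split.
    + refine (proj2 (proj2 (model_sol_derivs P beta K z0 T A x _ Hsol _ _)));
        [lra| destruct Hdomt; lra| apply Hdom; lra].
    + apply Hloc; [apply Hdom; lra| apply Rabs_def1; lra].
Qed.

Lemma model_stays_in_Wplus tau : in_dom T tau ->
  0 < F1 p beta (fst (A tau)) (snd (A tau)) -> 0 <= snd (A tau) ->
  exists d, 0 < d /\ forall s, in_dom T s -> tau <= s < tau + d -> Wplus p beta (A s).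
Proof.
  intros Hdomt Hgp Hvt.
  destruct (Req_dec (snd (A tau)) 0) as [Hv0|Hvne]; [now apply model_stays_in_Wplus_axis|].
  unfold Wplus, F1 in *. set (P := INR p) in *.
  set (eps := Rmin (- P * fst (A tau) + beta * snd (A tau)) (snd (A tau))).
  assert (Heps : 0 < eps) by (unfold eps; apply Rmin_pos; lra).
  assert (eps <= - P * fst (A tau) + beta * snd (A tau)) by apply Rmin_l.
  assert (eps <= snd (A tau)) by apply Rmin_r.
  destruct (sol_cont _ _ _ _ (- P) beta tau Hsol Hdomt eps Heps) as [d [Hd Hs]].
  exists d. split; [exact Hd|]. intros s Hsd [Hs1 Hs2].
  destruct (Hs s Hsd ltac:(apply Rabs_def1; lra)) as [_ [H2 H3]].
  apply Rabs_def2 in H2. apply Rabs_def2 in H3. split; lra.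
Qed.

Lemma model_exit_past_c : Wplus p beta z0 ->
  forall tau, is_glb (fun t => in_dom T t /\ ~ Wplus p beta (A t)) tau ->
  (INR p - 1) / K <= fst (A tau).
Proof.
  intros HW tau Htau. set (P := INR p) in *.
  destruct (first_hit_props T A (fun z => ~ Wplus p beta z) tau Htau) as [Hdomt Hbefore].
  assert (HA0 : A 0 = z0) by apply Hsol.
  assert (HWs : forall s, 0 <= s < tau -> Wplus p beta (A s))
    by (intros s Hs; apply NNPP, (Hbefore s Hs)).
  assert (Hnn : 0 <= - P * fst (A tau) + beta * snd (A tau) /\ 0 <= snd (A tau)).
  { destruct (Req_dec tau 0) as [E|E].
    - rewrite E, HA0. destruct HW as [Hv Hg]. unfold F1 in Hg. fold P in Hg. lra.
    - assert (0 < tau) by (destruct Hdomt; lra). split.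
      + apply (sol_lin_nonneg _ _ _ _ _ _ _ Hsol Hdomt); [lra|].
        intros s Hs. destruct (HWs s Hs) as [_ Hg]. unfold F1 in Hg. fold P in Hg. lra.
      + replace (snd (A tau)) with (0 * fst (A tau) + 1 * snd (A tau)) by ring.
        apply (sol_lin_nonneg _ _ _ _ _ _ _ Hsol Hdomt); [lra|].
        intros s Hs. destruct (HWs s Hs) as [Hv _]. lra. }
  assert (Hg0 : - P * fst (A tau) + beta * snd (A tau) = 0).
  { destruct (Req_dec (- P * fst (A tau) + beta * snd (A tau)) 0) as [E|Hne]; [exact E| exfalso].
    destruct (model_stays_in_Wplus tau Hdomt) as [d [Hd Hnear]];
      [unfold F1; fold P; lra| lra|].
    apply (is_glb_gap_absurd _ _ d Htau Hd). intros t Ht [Htd HnW]. exact (HnW (Hnear t Htd Ht)). }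
  assert (Htp : 0 < tau).
  { destruct (Req_dec tau 0) as [E|E].
    - rewrite E, HA0 in Hg0. destruct HW as [_ Hg]. unfold F1 in Hg. fold P in Hg. lra.
    - destruct Hdomt; lra. }
  apply (model_exit_right P beta K z0 T A tau); try assumption; try lra.
  intros s Hs. destruct (HWs s Hs) as [_ Hg]. exact Hg.
Qed.

End ModelExit.

Definition in_transit (P beta c dl : R) (z : R * R) : Prop :=
  0 < - P * fst z + beta * snd z /\
  ~ (Rabs (fst z - c) < dl /\ - P * fst z + beta * snd z < dl).

Section ModelReach.

Variables (p : nat) (beta K dl : R) (z0 : R * R) (T : option R) (A : R -> R * R).
Hypotheses (HP : 1 < INR p) (Hb : 0 < beta) (HK : 0 < K) (Hdl : 0 < dl)
  (Hsol : is_sol (quad_field (model_coefs (INR p) beta K)) z0 T A).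

Lemma in_transit_open c tau : in_dom T tau ->
  0 < - INR p * fst (A tau) + beta * snd (A tau) ->
  dl < Rabs (fst (A tau) - c) \/ dl < - INR p * fst (A tau) + beta * snd (A tau) ->
  exists d, 0 < d /\ forall s, in_dom T s -> Rabs (s - tau) < d -> in_transit (INR p) beta c dl (A s).
Proof.
  intros Hdomt Hgp Hfar. set (P := INR p) in *.
  set (gt := - P * fst (A tau) + beta * snd (A tau)) in *.
  set (eps := Rmin gt (Rmax (Rabs (fst (A tau) - c) - dl) (gt - dl))).
  assert (He1 : eps <= gt) by apply Rmin_l.
  assert (He2 : eps <= Rmax (Rabs (fst (A tau) - c) - dl) (gt - dl)) by apply Rmin_r.
  assert (Heps : 0 < eps).
  { apply Rmin_pos; [exact Hgp|].
    destruct Hfar; [eapply Rlt_le_trans, Rmax_l| eapply Rlt_le_trans, Rmax_r]; lra. }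
  destruct (sol_cont _ _ _ _ (- P) beta tau Hsol Hdomt eps Heps) as [d [Hd Hs]].
  exists d. split; [exact Hd|]. intros s Hsd Hst.
  destruct (Hs s Hsd Hst) as [Hu [_ Hg]]. apply Rabs_def2 in Hg. fold gt in Hg.
  split; [lra|]. intros [Hus Hgs].
  pose proof (Rabs_triang_inv (fst (A tau) - c) (fst (A tau) - fst (A s))) as Htri.
  replace (fst (A tau) - c - (fst (A tau) - fst (A s))) with (fst (A s) - c) in Htri by ring.
  rewrite Rabs_minus_sym in Hu.
  destruct (Rle_lt_dec (Rabs (fst (A tau) - c) - dl) (gt - dl)) as [Hm|Hm];
    [rewrite Rmax_right in He2 by lra| rewrite Rmax_left in He2 by lra]; destruct Hfar; lra.
Qed.

Lemma model_first_stop tau : Wplus p beta z0 ->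
  is_glb (fun t => in_dom T t /\ ~ in_transit (INR p) beta ((INR p - 1) / K) dl (A t)) tau ->
  in_dom T tau /\
  ((- INR p * fst (A tau) + beta * snd (A tau) = 0 /\ (INR p - 1) / K <= fst (A tau)) \/
   (Rabs (fst (A tau) - (INR p - 1) / K) <= dl /\
    0 <= - INR p * fst (A tau) + beta * snd (A tau) <= dl)).
Proof.
  intros HW Htau. set (P := INR p) in *. set (c := (P - 1) / K) in *.
  destruct (first_hit_props T A (fun z => ~ in_transit P beta c dl z) tau Htau) as [Hdomt Hbefore].
  assert (HA0 : A 0 = z0) by apply Hsol.
  assert (Hg0 : 0 < - P * fst (A 0) + beta * snd (A 0))
    by (rewrite HA0; destruct HW as [_ Hg]; unfold F1 in Hg; fold P in Hg; lra).
  assert (Hgs : forall s, 0 <= s < tau -> 0 < - P * fst (A s) + beta * snd (A s))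
    by (intros s Hs; destruct (Hbefore s Hs) as [_ Hn]; apply NNPP in Hn; apply Hn).
  assert (Hgnn : 0 <= - P * fst (A tau) + beta * snd (A tau)).
  { destruct (Req_dec tau 0) as [->|E]; [lra|].
    apply (sol_lin_nonneg _ _ _ _ _ _ _ Hsol Hdomt); [destruct Hdomt; lra|].
    intros s Hs. left. apply Hgs, Hs. }
  split; [exact Hdomt|].
  destruct (Req_dec (- P * fst (A tau) + beta * snd (A tau)) 0) as [Hz|Hnz].
  - left. split; [exact Hz|].
    assert (Htp : 0 < tau) by (destruct (Req_dec tau 0) as [->|E]; [lra| destruct Hdomt; lra]).
    apply (model_exit_right P beta K z0 T A tau); try assumption; lra.
  - right. apply NNPP. intro Hn.
    assert (Hgp : 0 < - P * fst (A tau) + beta * snd (A tau))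
      by (destruct (Rle_lt_or_eq_dec _ _ Hgnn); [assumption| congruence]).
    assert (Hfar : dl < Rabs (fst (A tau) - c) \/ dl < - P * fst (A tau) + beta * snd (A tau)).
    { destruct (Rlt_le_dec dl (Rabs (fst (A tau) - c))); [left; assumption|].
      destruct (Rlt_le_dec dl (- P * fst (A tau) + beta * snd (A tau))); [right; assumption|].
      exfalso. apply Hn. split; lra. }
    destruct (in_transit_open c tau Hdomt Hgp Hfar) as [d [Hd Hnear]].
    apply (is_glb_gap_absurd _ _ d Htau Hd). intros t Ht [Htd Hnt].
    apply Hnt, Hnear; [exact Htd| apply Rabs_def1; lra].
Qed.

End ModelReach.

(* A solution in transit for a long time contradicts [phase_exit_absurd] if it lives long
   enough, and [max_sol_bounded_absurd] otherwise, since it stays bounded by [phase_bounded]. *)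
Lemma model_transit_absurd (p : nat) (beta K dl M : R) z0 T A :
  1 < INR p -> 0 < beta -> 0 < K -> 0 < dl -> 0 <= M -> Rabs (fst z0) <= M -> Rabs (snd z0) <= M ->
  is_max_sol (quad_field (model_coefs (INR p) beta K)) z0 T A ->
  (forall t, in_dom T t ->
     t <= 1 + exit_time (INR p) beta K ((INR p - 1) / K) dl (M + 1) ((INR p + beta) * (M + 1)) ->
     in_transit (INR p) beta ((INR p - 1) / K) dl (A t)) -> False.
Proof.
  intros HP Hb HK Hdl HM Hu0 Hv0 Hmax Htransit. pose proof (proj1 Hmax) as Hsol.
  set (P := INR p) in *. set (c := (P - 1) / K) in *.
  set (G1 := (P + beta) * (M + 1)) in *.
  set (Tend := exit_time P beta K c dl (M + 1) G1) in *.
  assert (Hc : 0 < c) by (apply Rdiv_lt_0_compat; lra).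
  assert (HG1 : 0 <= G1) by (apply Rmult_le_pos; lra).
  assert (HTend : 0 < Tend) by (apply exit_time_pos; lra).
  destruct (sol_start_bounded _ _ _ _ M Hsol Hu0 Hv0) as [s0 [Hs0 [Hdoms0 [Hus0 Hvs0]]]].
  set (u := fun s => fst (A s)). set (g := fun s => - P * fst (A s) + beta * snd (A s)).
  assert (Hgs0 : g s0 <= G1).
  { unfold g, G1. apply Rabs_le_between in Hus0. apply Rabs_le_between in Hvs0. nra. }
  assert (Hphase : forall S, S <= s0 + Tend -> (forall t, s0 <= t <= S -> in_dom T t) ->
     (forall t, s0 <= t <= S ->
        derivable_pt_lim u t (g t) /\ derivable_pt_lim g t (gdot P beta K c (u t) (g t))) /\
     (forall t, s0 <= t <= S -> 0 < g t /\ ~ (Rabs (u t - c) < dl /\ g t < dl))).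
  { intros S HS Hdom. split; intros t Ht.
    - destruct (model_sol_derivs P beta K z0 T A t ltac:(lra) Hsol ltac:(lra) (Hdom t Ht))
        as [D1 [D2 _]]. split; [exact D1| exact D2].
    - apply (Htransit t (Hdom t Ht)). lra. }
  destruct (classic (forall t, s0 <= t <= s0 + Tend -> in_dom T t)) as [Hall|Hshort].
  - destruct (Hphase (s0 + Tend) ltac:(lra) Hall) as [Hd Hgood].
    apply (phase_exit_absurd P beta K c u g s0 (s0 + Tend)) with dl (M + 1) G1; try lra;
      try (intros t Ht; apply Hgood, Ht); try assumption. fold Tend. lra.
  - destruct T as [b|]; [| apply Hshort; intros t Ht; split; [lra| exact I]].
    assert (Hb0 : b <= s0 + Tend).
    { destruct (Rle_lt_dec b (s0 + Tend)) as [ok|Hgt]; [exact ok|].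
      exfalso. apply Hshort. intros t Ht. split; lra. }
    set (Gx := g_bound P beta K c (M + 1) G1 Tend).
    set (Ux := M + 1 + Gx * Tend).
    assert (HGx : 0 <= Gx) by (apply g_bound_nonneg; lra).
    assert (HUx : 0 <= Ux) by (unfold Ux; pose proof (Rmult_le_pos _ _ HGx (Rlt_le _ _ HTend)); lra).
    assert (HVx : 0 <= (Gx + P * Ux) / beta) by (apply Rdiv_le_0_compat; nra).
    apply (max_sol_bounded_absurd (model_coefs P beta K) z0 b A (1 + Ux + (Gx + P * Ux) / beta) s0);
      [lra| destruct Hdoms0; lra| exact Hmax|].
    intros t Ht.
    assert (Hdom : forall x, s0 <= x <= t -> in_dom (Some b) x) by (intros x Hx; split; lra).
    destruct (Hphase t ltac:(lra) Hdom) as [Hd Hgood].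
    destruct (phase_bounded P beta K c u g s0 t ltac:(lra) Hb HK Hc Hd
                (fun x Hx => proj1 (Hgood x Hx)) (M + 1) G1 Tend ltac:(lra) Hus0 Hgs0
                ltac:(lra) ltac:(lra) t ltac:(lra)) as [Hut [Hgt Hgx]].
    fold Gx Ux in Hut, Hgx. unfold u, g in Hut, Hgt, Hgx.
    split; [lra|].
    apply Rle_trans with ((Gx + P * Ux) / beta); [apply (phase_v_bound _ _ (fst (A t))); lra| lra].
Qed.


Lemma model_reaches_target (p : nat) (beta K delta M : R) :
  1 < INR p -> 0 < beta -> 0 < K -> 0 < delta -> 0 <= M ->
  exists T0, forall z0, Rabs (fst z0) <= M -> Rabs (snd z0) <= M -> Wplus p beta z0 ->
   forall T A, is_max_sol (quad_field (model_coefs (INR p) beta K)) z0 T A ->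
   exists t, in_dom T t /\ t <= T0 /\
     ((- INR p * fst (A t) + beta * snd (A t) = 0 /\ (INR p - 1) / K <= fst (A t)) \/
      (Rabs (fst (A t) - (INR p - 1) / K) < delta /\
       Rabs (snd (A t) - INR p * ((INR p - 1) / K) / beta) < delta)).
Proof.
  intros HP Hb HK Hdel HM. set (P := INR p) in *. set (c := (P - 1) / K).
  set (dl := Rmin (delta / 2) (delta * beta / (2 * (P + 1)))).
  assert (Hdl : 0 < dl) by (apply Rmin_pos; [lra| apply Rdiv_lt_0_compat; nra]).
  assert (Hdl1 : dl <= delta / 2) by apply Rmin_l.
  assert (Hdl2 : dl <= delta * beta / (2 * (P + 1))) by apply Rmin_r.
  set (T0 := 1 + exit_time P beta K c dl (M + 1) ((P + beta) * (M + 1))).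
  exists T0. intros z0 Hu0 Hv0 HW T A Hmax.
  destruct (classic (exists t, in_dom T t /\ t <= T0 /\ ~ in_transit P beta c dl (A t)))
    as [[t1 [Ht1 [Ht1T Hstop]]]|Hno].
  - destruct (first_hit_le T A (fun z => ~ in_transit P beta c dl z) t1 T0 Ht1 Hstop Ht1T)
      as [tau [Htau HtauT]].
    destruct (model_first_stop p beta K dl z0 T A HP Hb HK (proj1 Hmax) tau HW Htau)
      as [Hdomt [Hexit|[Hu Hg]]].
    + exists tau. split; [exact Hdomt|]. split; [exact HtauT|]. left. exact Hexit.
    + fold P c in Hu, Hg.
      exists tau. split; [exact Hdomt|]. split; [exact HtauT|]. right. split; [lra|].
      apply Rle_lt_trans with ((dl + P * dl) / beta).
      { apply (phase_v_bound _ _ (fst (A tau) - c)); [lra| lra| exact Hu|].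
        replace (- P * (fst (A tau) - c) + beta * (snd (A tau) - P * c / beta))
          with (- P * fst (A tau) + beta * snd (A tau)) by (field; lra).
        exact Hg. }
      apply Rle_lt_trans with (delta / 2); [|lra].
      apply Rle_trans with ((P + 1) * (delta * beta / (2 * (P + 1))) / beta).
      - unfold Rdiv. apply Rmult_le_compat_r; [left; apply Rinv_0_lt_compat, Hb|].
        replace (dl + P * dl) with ((P + 1) * dl) by ring. apply Rmult_le_compat_l; lra.
      - right. field. lra.
  - exfalso. apply (model_transit_absurd p beta K dl M z0 T A HP Hb HK Hdl HM Hu0 Hv0 Hmax).
    intros t Ht HtT. apply NNPP. intro Hn. apply Hno. exists t. auto.
Qed.

(** * The constants of the statement *)

Section Constants.

Variables (p : nat) (beta Lam : R).
Hypotheses (HP : 1 < INR p) (Hb : 0 < beta) (HL : 0 < Lam).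

Lemma uc_eq : uc p beta Lam = (INR p - 1) / ((INR p - 1) / beta + Lam).
Proof. unfold uc. assert (0 < INR p - 1 + beta * Lam) by nra. field. repeat split; lra. Qed.

Lemma ubarc_eq : ubarc_finite p beta Lam ->
  ubarc p beta Lam = (INR p - 1) / ((INR p - 1) / beta - Lam).
Proof. unfold ubarc_finite, ubarc. intro Hf. field. repeat split; lra. Qed.

Lemma uc_mul : uc p beta Lam * (INR p - 1 + beta * Lam) = beta * (INR p - 1).
Proof. unfold uc. field. split; nra. Qed.

Lemma uc_pos : 0 < uc p beta Lam.
Proof.
  rewrite uc_eq. apply Rdiv_lt_0_compat; [lra|].
  assert (0 < (INR p - 1) / beta) by (apply Rdiv_lt_0_compat; lra). lra.
Qed.

Lemma uc_le_ubarc : ubarc_finite p beta Lam -> uc p beta Lam <= ubarc p beta Lam.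
Proof.
  unfold ubarc_finite, uc, ubarc. intro Hf.
  assert (0 < beta * Lam / (INR p - 1)) by (apply Rdiv_lt_0_compat; nra).
  assert (beta * Lam / (INR p - 1) < 1).
  { apply (Rmult_lt_reg_r (INR p - 1)); [lra|].
    unfold Rdiv. rewrite Rmult_assoc, Rinv_l by lra. lra. }
  apply Rmult_le_compat_l; [lra|]. apply Rinv_le_contravar; lra.
Qed.

(* Every point of the exit line [{F1 = 0}] with [u >= u_c] lies between [f_L] and [l_1]; it is
   in [A_0] or else in [A_1]. *)
Lemma exit_line_target delta z : - INR p * fst z + beta * snd z = 0 -> uc p beta Lam <= fst z ->
  target p beta Lam delta z.
Proof.
  intros Hg Hu. pose proof uc_pos. pose proof uc_mul as E.
  set (P := INR p) in *. set (u := fst z) in *.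
  assert (Hv : snd z = P * u / beta) by (field_simplify_eq; lra).
  destruct (classic (A0 p beta Lam z)) as [HA|HA]; [left; left; exact HA| right].
  assert (Hk : beta * (P - 1) <= u * (P - 1 + beta * Lam)).
  { rewrite <- E. apply Rmult_le_compat_r; nra. }
  assert (Hden : 0 < fL_den p beta Lam u).
  { unfold fL_den. fold P. assert (0 < P * beta * u) by (repeat apply Rmult_lt_0_compat; lra). nra. }
  unfold A1. split; [|split; [exact Hden| split; [split|exact HA]]].
  - rewrite Hv. apply Rdiv_le_0_compat; [|lra]. apply Rmult_le_pos; lra.
  - rewrite Hv. unfold fL. fold P u.
    apply (Rmult_le_reg_r (fL_den p beta Lam u)); [exact Hden|].
    unfold Rdiv at 1. rewrite Rmult_assoc, Rinv_l, Rmult_1_r by lra.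
    unfold fL_den. fold P. apply (Rmult_le_reg_r beta); [exact Hb|].
    replace (P * u / beta * (P - 1 + P * beta * u + beta * Lam) * beta)
      with (P * (u * (P - 1 + beta * Lam)) + P * P * beta * u * u) by (field; lra).
    assert (P * (beta * (P - 1)) <= P * (u * (P - 1 + beta * Lam))) by (apply Rmult_le_compat_l; lra).
    nra.
  - rewrite Hv. unfold l1. fold P u. lra.
Qed.

Lemma fL_uc : fL p beta Lam (uc p beta Lam) = INR p * uc p beta Lam / beta.
Proof.
  pose proof uc_pos. pose proof uc_mul.
  set (c := uc p beta Lam) in *. set (P := INR p) in *.
  unfold fL, fL_den. fold P c.
  assert (0 < P * beta * c) by (apply Rmult_lt_0_compat; [apply Rmult_lt_0_compat|]; lra).
  assert (0 < beta * Lam) by (apply Rmult_lt_0_compat; lra).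
  assert (Hd : 0 < P - 1 + P * beta * c + beta * Lam) by lra.
  apply (Rmult_eq_reg_r ((P - 1 + P * beta * c + beta * Lam) * beta)); [| nra].
  unfold Rdiv. field_simplify; [| lra | nra]. nra.
Qed.

Lemma fU_ubarc : ubarc_finite p beta Lam ->
  fU p beta Lam (ubarc p beta Lam) = INR p * ubarc p beta Lam / beta.
Proof.
  intro Hf. pose proof uc_pos. pose proof (uc_le_ubarc Hf). unfold ubarc_finite in Hf.
  assert (E : ubarc p beta Lam * (INR p - 1 - beta * Lam) = beta * (INR p - 1)).
  { unfold ubarc. field. split; [lra|]. intro E.
    assert (beta * Lam = INR p - 1); [|lra].
    apply (Rmult_eq_reg_r (/ (INR p - 1))); [| apply Rinv_neq_0_compat; lra].
    rewrite Rinv_r by lra. unfold Rdiv in E. lra. }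
  set (c := ubarc p beta Lam) in *. set (P := INR p) in *.
  unfold fU, fU_den. fold P c.
  assert (0 < P * beta * c) by (apply Rmult_lt_0_compat; [apply Rmult_lt_0_compat|]; lra).
  assert (Hd : 0 < P - 1 + P * beta * c - beta * Lam) by lra.
  apply (Rmult_eq_reg_r ((P - 1 + P * beta * c - beta * Lam) * beta)); [| nra].
  unfold Rdiv. field_simplify; [| lra | nra]. nra.
Qed.

End Constants.

Lemma model_hits_target p beta Lam delta M K :
  1 < INR p -> 0 < beta -> 0 < Lam -> 0 < K -> 0 < delta -> 0 <= M ->
  uc p beta Lam <= (INR p - 1) / K ->
  (forall z, ballinf ((INR p - 1) / K, INR p * ((INR p - 1) / K) / beta) delta z ->
     A0delta p beta Lam delta z) ->
  exists T0, forall T1, T0 <= T1 -> forall x0 y0, Rabs x0 <= M -> Rabs y0 <= M ->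
    Wplus p beta (x0, y0) ->
    forall T A, is_max_sol (quad_field (model_coefs (INR p) beta K)) (x0, y0) T A ->
    exists tau, is_glb (fun t => in_dom T t /\ target p beta Lam delta (A t)) tau /\ tau <= T1.
Proof.
  intros HP Hb HL HK Hdel HM Huc Hball.
  destruct (model_reaches_target p beta K delta M HP Hb HK Hdel HM) as [T0 HT0].
  exists T0. intros T1 HT1 x0 y0 Hx0 Hy0 HW T A Hmax.
  destruct (HT0 (x0, y0) Hx0 Hy0 HW T A Hmax) as [t [Htd [HtT Hstop]]].
  apply (first_hit_le T A _ t T1 Htd); [|lra].
  destruct Hstop as [[Hg Hu]|[Hu Hv]].
  - apply exit_line_target; [assumption..| lra].
  - left. apply Hball. split; assumption.
Qed.

Section Flows.

Variables (p : nat) (beta Lam : R).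
Hypotheses (HP : 1 < INR p) (Hb : 0 < beta) (HL : 0 < Lam).

Lemma KL_pos : 0 < (INR p - 1) / beta + Lam.
Proof. assert (0 < (INR p - 1) / beta) by (apply Rdiv_lt_0_compat; lra). lra. Qed.

Lemma KU_pos : ubarc_finite p beta Lam -> 0 < (INR p - 1) / beta - Lam.
Proof.
  unfold ubarc_finite. intro Hf. enough (Lam < (INR p - 1) / beta) by lra.
  apply (Rmult_lt_reg_l beta); [exact Hb|].
  unfold Rdiv. now rewrite <- Rmult_assoc, Rinv_r_simpl_m by lra.
Qed.

Lemma FL_exit_past_uc x0 y0 T A tau : Wplus p beta (x0, y0) ->
  is_max_sol (FL p beta Lam) (x0, y0) T A ->
  is_glb (fun t => in_dom T t /\ ~ Wplus p beta (A t)) tau -> uc p beta Lam <= fst (A tau).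
Proof.
  intros HW [Hsol _]. rewrite (FL_model p beta Lam ltac:(lra)) in Hsol. rewrite uc_eq by assumption.
  exact (model_exit_past_c p _ _ _ T A HP Hb KL_pos Hsol HW tau).
Qed.

Lemma FU_exit_past_ubarc x0 y0 T A tau : ubarc_finite p beta Lam -> Wplus p beta (x0, y0) ->
  is_max_sol (FU p beta Lam) (x0, y0) T A ->
  is_glb (fun t => in_dom T t /\ ~ Wplus p beta (A t)) tau -> ubarc p beta Lam <= fst (A tau).
Proof.
  intros Hf HW [Hsol _]. rewrite (FU_model p beta Lam ltac:(lra)) in Hsol.
  rewrite ubarc_eq by assumption.
  exact (model_exit_past_c p _ _ _ T A HP Hb (KU_pos Hf) Hsol HW tau).
Qed.

Lemma FL_hits_target delta M : 0 < delta -> 0 <= M ->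
  exists T0, forall T1, T0 <= T1 -> forall x0 y0, Rabs x0 <= M -> Rabs y0 <= M ->
    Wplus p beta (x0, y0) -> forall T A, is_max_sol (FL p beta Lam) (x0, y0) T A ->
    exists tau, is_glb (fun t => in_dom T t /\ target p beta Lam delta (A t)) tau /\ tau <= T1.
Proof.
  intros Hdel HM. rewrite (FL_model p beta Lam ltac:(lra)).
  apply model_hits_target; try assumption; [apply KL_pos| rewrite <- uc_eq by assumption; lra|].
  intros z Hz. right. left. unfold zc. rewrite fL_uc by assumption.
  rewrite <- uc_eq in Hz by assumption. exact Hz.
Qed.

Lemma FU_hits_target delta M : ubarc_finite p beta Lam -> 0 < delta -> 0 <= M ->
  exists T0, forall T1, T0 <= T1 -> forall x0 y0, Rabs x0 <= M -> Rabs y0 <= M ->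
    Wplus p beta (x0, y0) -> forall T A, is_max_sol (FU p beta Lam) (x0, y0) T A ->
    exists tau, is_glb (fun t => in_dom T t /\ target p beta Lam delta (A t)) tau /\ tau <= T1.
Proof.
  intros Hf Hdel HM. rewrite (FU_model p beta Lam ltac:(lra)).
  apply model_hits_target; try assumption; [apply KU_pos, Hf|
    rewrite <- ubarc_eq by assumption; apply uc_le_ubarc; assumption|].
  intros z Hz. right. right. split; [exact Hf|]. unfold zbarc. rewrite fU_ubarc by assumption.
  rewrite <- ubarc_eq in Hz by assumption. exact Hz.
Qed.

End Flows.

Theorem mainTheorem19 (p : nat) (beta Lam : R) :
  (3 <= p)%nat -> 0 < beta -> 0 < Lam ->
  (forall x0 y0 : R, Wplus p beta (x0, y0) ->
     (forall T A, is_max_sol (FL p beta Lam) (x0, y0) T A ->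
        forall tau, is_glb (fun t => in_dom T t /\ ~ Wplus p beta (A t)) tau ->
        uc p beta Lam <= fst (A tau)) /\
     (ubarc_finite p beta Lam ->
      forall T A, is_max_sol (FU p beta Lam) (x0, y0) T A ->
        forall tau, is_glb (fun t => in_dom T t /\ ~ Wplus p beta (A t)) tau ->
        ubarc p beta Lam <= fst (A tau))) /\
  (forall B : R * R -> Prop,
     (forall z, B z -> 0 <= snd z) ->
     (exists M, forall z, B z -> Rabs (fst z) <= M /\ Rabs (snd z) <= M) ->
     forall delta, 0 < delta ->
     exists T0 : R, forall x0 y0 : R, B (x0, y0) -> Wplus p beta (x0, y0) ->
       (forall T A, is_max_sol (FL p beta Lam) (x0, y0) T A ->
          exists tau, is_glb (fun t => in_dom T t /\
                                target p beta Lam delta (A t)) tau /\ tau <= T0) /\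
       (ubarc_finite p beta Lam ->
        forall T A, is_max_sol (FU p beta Lam) (x0, y0) T A ->
          exists tau, is_glb (fun t => in_dom T t /\
                                target p beta Lam delta (A t)) tau /\ tau <= T0)).
Proof.
  intros Hp Hb HL. assert (HP : 1 < INR p) by (apply (lt_INR 1); lia).
  split.
  - intros x0 y0 HW. split.
    + intros T A Hmax tau. eapply FL_exit_past_uc; eassumption.
    + intros Hf T A Hmax tau. eapply FU_exit_past_ubarc; eassumption.
  - intros B _ [M HM] delta Hdel.
    assert (HBM : forall x0 y0, B (x0, y0) -> Rabs x0 <= Rabs M /\ Rabs y0 <= Rabs M)
      by (intros x0 y0 Hz; destruct (HM _ Hz); simpl in *; pose proof (Rle_abs M); split; lra).
    destruct (FL_hits_target p beta Lam HP Hb HL delta (Rabs M) Hdel (Rabs_pos M)) as [TL HTL].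
    destruct (classic (ubarc_finite p beta Lam)) as [Hf|Hnf].
    + destruct (FU_hits_target p beta Lam HP Hb HL delta (Rabs M) Hf Hdel (Rabs_pos M))
        as [TU HTU].
      exists (Rmax TL TU). intros x0 y0 Hz HW. destruct (HBM x0 y0 Hz). split.
      * apply (HTL _ (Rmax_l TL TU)); assumption.
      * intros _. apply (HTU _ (Rmax_r TL TU)); assumption.
    + exists TL. intros x0 y0 Hz HW. destruct (HBM x0 y0 Hz). split.
      * apply (HTL _ (Rle_refl TL)); assumption.
      * intro Hf. contradiction.
Qed.
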